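(* Let $r>0$ and consider the delay system $\dot x(t)=\mathrm{A}x(t)+\mathrm{B}x(t-r)+\widehat f(x(t),x(t-r))$ in $\mathbb{R}^n$ satisfying the hypotheses described in the context, together with its perturbation $\dot x(t)=\mathrm{A}_\epsilon x(t)+\mathrm{B}_\epsilon x(t-r)+\widehat f(x(t),x(t-r))$, $\epsilon>0$, as described in the context. Let \[\mathrm{M}_\epsilon=-\mathrm{B}_\epsilon e^{-(2\lambda_\epsilon+\overline{\lambda}_\epsilon)r}-\mathrm{A}_\epsilon+(2\lambda_\epsilon+\overline{\lambda}_\epsilon)\mathrm{I},\] and let $R_{\epsilon1},R_{\epsilon2}\in\mathbb{C}^n$ be as in the context. Then for every (small enough) $\epsilon>0$, \[\Psi_{\epsilon1}(0)\mathrm{M}_\epsilon=\mu_\epsilon h_1(\epsilon),\qquad \Psi_{\epsilon1}(0)(\mathrm{B}_\epsilon R_{\epsilon1}-R_{\epsilon2})=\mu_\epsilon h_2(\epsilon),\] where $h_1$ (row-vector valued) and $h_2$ (scalar valued) have finite limits as $\epsilon\to0$.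
   Context: Unperturbed setting: $f(x,y)=\mathrm{A}x+\mathrm{B}y+\widehat f(x,y)$ is $C^k$, $k>3$, near $(0,0)$, $f(0,0)=0$, $\widehat f$ the nonlinear part; $\det(\lambda\mathrm{I}-\mathrm{A}-e^{-\lambda r}\mathrm{B})=0$ has simple roots $\pm\omega i$, $\omega>0$, all other roots having negative real part. Perturbation: $\mathrm{A}_\epsilon,\mathrm{B}_\epsilon$ real $n\times n$ matrices depending smoothly on $\epsilon>0$, $\mathrm{A}_\epsilon\to\mathrm{A}$, $\mathrm{B}_\epsilon\to\mathrm{B}$ as $\epsilon\searrow0$, such that for small $\epsilon$ the equation $\det(\lambda\mathrm{I}-\mathrm{A}_\epsilon-e^{-\lambda r}\mathrm{B}_\epsilon)=0$ has simple roots $\lambda_\epsilon=\mu_\epsilon+\omega_\epsilon i$, $\overline{\lambda}_\epsilon$, with $\mu_\epsilon>0$, all other roots having negative real part; then $\mu_\epsilon\to0$, $\omega_\epsilon\to\omega$. Objects: $\varphi_{\epsilon1}(s)=\varphi_{\epsilon1}(0)e^{\lambda_\epsilon s}$, $\varphi_{\epsilon2}=\overline{\varphi_{\epsilon1}}$, $s\in[-r,0]$, with $(\lambda_\epsilon\mathrm{I}-\mathrm{A}_\epsilon-\mathrm{B}_\epsilon e^{-\lambda_\epsilon r})\varphi_{\epsilon1}(0)=0$; row vector $\psi_{\epsilon1}(0)\ne0$ with $\psi_{\epsilon1}(0)(-\lambda_\epsilon\mathrm{I}+\mathrm{A}_\epsilon+\mathrm{B}_\epsilon e^{-\lambda_\epsilon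 r})=0$; $\Psi_{\epsilon1}(0)=[\psi_{\epsilon1}(0)\varphi_{\epsilon1}(0)+\psi_{\epsilon1}(0)\mathrm{B}_\epsilon\varphi_{\epsilon1}(0)e^{-\lambda_\epsilon r}r]^{-1}\psi_{\epsilon1}(0)$, $\Psi_{\epsilon1}(\zeta)=\Psi_{\epsilon1}(0)e^{-\lambda_\epsilon\zeta}$, $\zeta\in[0,r]$; bilinear form $\langle\psi,\varphi\rangle_\epsilon=\psi(0)\varphi(0)+\int_{-r}^0\psi(\zeta+r)\mathrm{B}_\epsilon\varphi(\zeta)d\zeta$ (so $\langle\Psi_{\epsilon1},\varphi_{\epsilon1}\rangle_\epsilon=1$, $\langle\Psi_{\epsilon1},\varphi_{\epsilon2}\rangle_\epsilon=0$). The perturbed problem has an unstable manifold, graph of $w_\epsilon(v,\overline v)=\sum_{j+k\ge2}\frac{1}{j!k!}w_{\epsilon j,k}v^j\overline v^k$, $w_{\epsilon j,k}\in C([-r,0],\mathbb{C}^n)$ with $\langle\Psi_{\epsilon1},w_{\epsilon j,k}\rangle_\epsilon=0$. With $\Phi_\epsilon=v\varphi_{\epsilon1}+\overline v\varphi_{\epsilon2}+w_\epsilon(v,\overline v)$, $\widehat f(\Phi_\epsilon(0),\Phi_\epsilon(-r))=\sum\frac{1}{j!k!}f_{\epsilon j,k}v^j\overline v^k$ and $g_{\epsilon j,k}=\Psi_{\epsilon1}(0)f_{\epsilon j,k}$. The corresponding unperturbed objects ($\varphi_1,\Psi_1,w_{j,k},f_{j,k},g_{j,k}$, defined identically with $\epsilon=0$,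 $\lambda_0=\omega i$, and the center manifold) are the limits of the perturbed ones as $\epsilon\to0$. Define $R_{\epsilon1}=-\frac{g_{\epsilon2,1}}{\lambda_\epsilon+\overline\lambda_\epsilon}\varphi_{\epsilon1}(0)(e^{-\lambda_\epsilon r}-e^{-(2\lambda_\epsilon+\overline\lambda_\epsilon)r})-\frac{\overline g_{\epsilon1,2}}{2\lambda_\epsilon}\overline{\varphi_{\epsilon1}(0)}(e^{-\overline\lambda_\epsilon r}-e^{-(2\lambda_\epsilon+\overline\lambda_\epsilon)r})-e^{-(2\lambda_\epsilon+\overline\lambda_\epsilon)r}\int_{-r}^0\big[2g_{\epsilon1,1}w_{\epsilon2,0}(\theta)+(g_{\epsilon2,0}+2\overline g_{\epsilon1,1})w_{\epsilon1,1}(\theta)+\overline g_{\epsilon0,2}w_{\epsilon0,2}(\theta)\big]e^{-(2\lambda_\epsilon+\overline\lambda_\epsilon)\theta}d\theta$, $R_{\epsilon2}=g_{\epsilon2,1}\varphi_{\epsilon1}(0)+\overline g_{\epsilon1,2}\overline{\varphi_{\epsilon1}(0)}-f_{\epsilon2,1}+2g_{\epsilon1,1}w_{\epsilon2,0}(0)+(g_{\epsilon2,0}+2\overline g_{\epsilon1,1})w_{\epsilon1,1}(0)+\overline g_{\epsilon0,2}w_{\epsilon0,2}(0)$. Then $w_{\epsilon2,1}(0)$ is the solution of $\mathrm{M}_\epsilon X=\mathrm{B}_\epsilon R_{\epsilon1}-R_{\epsilon2}$. *)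

From Stdlib Require Import Reals.
From Coquelicot Require Import Coquelicot.
Open Scope R_scope.

(* Vectors of C^n are represented as nat -> C (only indices < n matter),
   complex n x n matrices as nat -> nat -> C, real ones as nat -> nat -> R. *)
Definition cvec := nat -> C.
Definition cmat := nat -> nat -> C.
Definition rmat := nat -> nat -> R.

Fixpoint csum (n : nat) (f : nat -> C) : C :=
  match n with
  | O => RtoC 0
  | S m => Cplus (csum m f) (f m)
  end.

Definition mv (n : nat) (M : cmat) (v : cvec) : cvec :=
  fun i => csum n (fun j => Cmult (M i j) (v j)).
Definition vm (n : nat) (u : cvec) (M : cmat) : cvec :=
  fun j => csum n (fun i => Cmult (u i) (M i j)).
Definition dot (n : nat) (u v : cvec) : C := csum n (fun i => Cmult (u i) (v i)).

Definition rtoc_mat (A : rmat) : cmat := fun i j => RtoC (A i j).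
Definition idm : cmat := fun i j => if Nat.eqb i j then RtoC 1 else RtoC 0.

Definition vadd (u v : cvec) : cvec := fun i => Cplus (u i) (v i).
Definition vsub (u v : cvec) : cvec := fun i => Cminus (u i) (v i).
Definition vscal (a : C) (u : cvec) : cvec := fun i => Cmult a (u i).

Definition cexp (z : C) : C :=
  (exp (Re z) * cos (Im z), exp (Re z) * sin (Im z)).

Definition minor0 (i : nat) (M : cmat) : cmat :=
  fun a b => M (if Nat.ltb a i then a else S a) (S b).
Fixpoint det (n : nat) (M : cmat) : C :=
  match n with
  | O => RtoC 1
  | S m => csum n (fun i => Cmult (Cmult (RtoC ((-1) ^ i)) (M i O)) (det m (minor0 i M)))
  end.

Definition charmat (A B : rmat) (r : R) (z : C) : cmat :=
  fun i j => Cminus (Cminus (Cmult z (idm i j)) (RtoC (A i j)))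
                    (Cmult (cexp (Cmult (RtoC (- r)) z)) (RtoC (B i j))).
Definition chardet (n : nat) (A B : rmat) (r : R) (z : C) : C :=
  det n (charmat A B r z).

Definition simple_root (n : nat) (A B : rmat) (r : R) (z : C) : Prop :=
  chardet n A B r z = RtoC 0 /\
  exists d : C, is_derive (chardet n A B r) z d /\ d <> RtoC 0.

Definition nonzero_vec (n : nat) (v : cvec) : Prop := exists i, (i < n)%nat /\ v i <> RtoC 0.

Definition cint (f : R -> C) (a b : R) : C :=
  (RInt (fun t => Re (f t)) a b, RInt (fun t => Im (f t)) a b).
Definition vint (f : R -> cvec) (a b : R) : cvec := fun i => cint (fun t => f t i) a b.

Definition Psi0 (n : nat) (B : rmat) (r : R) (lam : C) (psi phi : cvec) : cvec :=
  vscal (Cinv (Cplus (dot n psi phi)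
                (Cmult (Cmult (dot n psi (mv n (rtoc_mat B) phi))
                              (cexp (Cmult (RtoC (- r)) lam))) (RtoC r)))) psi.

Definition Psifun (lam : C) (P0 : cvec) : R -> cvec :=
  fun zeta => vscal (cexp (Cmult (RtoC (- zeta)) lam)) P0.

Definition bilin (n : nat) (B : rmat) (r : R) (psi : R -> cvec) (phi : R -> cvec) : C :=
  Cplus (dot n (psi 0) (phi 0))
        (cint (fun zeta => dot n (psi (zeta + r)) (mv n (rtoc_mat B) (phi zeta))) (- r) 0).

Definition Mmat (A B : rmat) (r : R) (lam : C) : cmat :=
  let s := Cplus (Cmult (RtoC 2) lam) (Cconj lam) in
  fun i j => Cplus (Cminus (Copp (Cmult (RtoC (B i j)) (cexp (Cmult (RtoC (- r)) s))))
                           (RtoC (A i j)))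
                   (Cmult s (idm i j)).

Definition R1vec (r : R) (lam : C) (phi0 : cvec)
  (g20 g11 g02 g21 g12 : C) (w20 w11 w02 : R -> cvec) : cvec :=
  let s := Cplus (Cmult (RtoC 2) lam) (Cconj lam) in
  let es := cexp (Cmult (RtoC (- r)) s) in
  let integrand : R -> cvec := fun th =>
    vscal (cexp (Cmult (RtoC (- th)) s))
      (vadd (vadd (vscal (Cmult (RtoC 2) g11) (w20 th))
                  (vscal (Cplus g20 (Cmult (RtoC 2) (Cconj g11))) (w11 th)))
            (vscal (Cconj g02) (w02 th))) in
  vsub (vsub (vscal (Copp (Cdiv g21 (Cplus lam (Cconj lam))))
                    (vscal (Cminus (cexp (Cmult (RtoC (- r)) lam)) es) phi0))
             (vscal (Cdiv (Cconj g12) (Cmult (RtoC 2) lam))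
                    (vscal (Cminus (cexp (Cmult (RtoC (- r)) (Cconj lam))) es)
                           (fun i => Cconj (phi0 i)))))
       (vscal es (vint integrand (- r) 0)).

Definition R2vec (phi0 : cvec) (g20 g11 g02 g21 g12 : C) (f21 : cvec)
  (w20 w11 w02 : R -> cvec) : cvec :=
  vadd (vadd (vadd (vsub (vadd (vscal g21 phi0) (vscal (Cconj g12) (fun i => Cconj (phi0 i))))
                         f21)
                   (vscal (Cmult (RtoC 2) g11) (w20 0)))
             (vscal (Cplus g20 (Cmult (RtoC 2) (Cconj g11))) (w11 0)))
       (vscal (Cconj g02) (w02 0)).

Definition cont_on (n : nat) (r : R) (w : R -> cvec) : Prop :=
  forall i th, (i < n)%nat -> -r <= th <= 0 ->
    filterlim (fun t => w t i) (within (fun t => -r <= t <= 0) (locally th)) (locally (w th i)).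

Definition unif_cv (n : nat) (r : R) (w : R -> R -> cvec) (w0 : R -> cvec) : Prop :=
  forall eta, 0 < eta -> exists delta, 0 < delta /\
    forall e th i, 0 < e < delta -> -r <= th <= 0 -> (i < n)%nat ->
      Cmod (Cminus (w e th i) (w0 th i)) < eta.

Definition cv0 {T : UniformSpace} (u : R -> T) (l : T) : Prop :=
  filterlim u (at_right 0) (locally l).

From Stdlib Require Import Reals Lra Lia.
From Coquelicot Require Import Coquelicot.
Open Scope R_scope.

(* Write [lam = mu + i om], so that [2 lam + conj lam = lam + 2 mu]. Since [Psi] is a left
   eigenvector for [lam], [Psi M] only sees the difference between the characteristic
   matrices at [lam + 2 mu] and at [lam], which is of order [mu]. For the second quantity,
   the orthogonality of the [w_jk] to [Psi] turns [Psi w_jk(0)] into an integral against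
   [e^{-lam (t + r)}], the normalisation of [Psi] evaluates [Psi phi], and the left and right
   eigenvector relations at [lam] and [conj lam] evaluate [Psi (conj phi)]; afterwards every
   term carries a factor [lam + conj lam = 2 mu] or [e^{-lam s} - e^{-(lam + 2 mu) s}]. The
   quotients left over converge because [lam -> i om] with [om <> 0], and the integrals
   converge because the [w_jk] converge uniformly on [-r, 0]. *)

Section FilterlimC.

Context {T : Type} {F : (T -> Prop) -> Prop} {FF : Filter F}.

Lemma filterlim_Rplus (u v : T -> R) a b :
  filterlim u F (locally a) -> filterlim v F (locally b) ->
  filterlim (fun e => u e + v e) F (locally (a + b)).
Proof. intros Hu Hv. exact (filterlim_comp_2 u v plus Hu Hv (filterlim_plus a b)). Qed.

Lemma filterlim_Rmult (u v : T -> R) a b :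
  filterlim u F (locally a) -> filterlim v F (locally b) ->
  filterlim (fun e => u e * v e) F (locally (a * b)).
Proof.
  intros Hu Hv.
  exact (filterlim_comp_2 u v (@mult R_AbsRing) Hu Hv (filterlim_mult (K := R_AbsRing) a b)).
Qed.

Lemma filterlim_Ropp (u : T -> R) a :
  filterlim u F (locally a) -> filterlim (fun e => - u e) F (locally (- a)).
Proof.
  intros Hu. eapply filterlim_comp; [exact Hu | exact (filterlim_opp (V := R_NormedModule) a)].
Qed.

Lemma filterlim_Rminus (u v : T -> R) a b :
  filterlim u F (locally a) -> filterlim v F (locally b) ->
  filterlim (fun e => u e - v e) F (locally (a - b)).
Proof. intros Hu Hv. apply filterlim_Rplus; [exact Hu | exact (filterlim_Ropp _ _ Hv)]. Qed.

Lemma filterlim_continuity_pt (f : R -> R) (u : T -> R) l :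
  continuity_pt f l -> filterlim u F (locally l) -> filterlim (fun e => f (u e)) F (locally (f l)).
Proof.
  intros Hf Hu. apply continuity_pt_filterlim in Hf.
  eapply filterlim_comp; [exact Hu | exact Hf].
Qed.

Lemma filterlim_Rinv (u : T -> R) l :
  l <> 0 -> filterlim u F (locally l) -> filterlim (fun e => / u e) F (locally (/ l)).
Proof.
  intros Hl. apply filterlim_continuity_pt, continuity_pt_inv; [|exact Hl].
  apply derivable_continuous_pt, derivable_pt_id.
Qed.

Lemma filterlim_C_split (f : T -> C) (L : C) :
  filterlim f F (locally L) <->
  filterlim (fun e => Re (f e)) F (locally (Re L)) /\
  filterlim (fun e => Im (f e)) F (locally (Im L)).
Proof.
  rewrite !filterlim_locally. split.
  - intros H; split; intros eps; generalize (H eps); apply filter_imp; intros x [H1 H2]; assumption.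
  - intros [H1 H2] eps. generalize (filter_and _ _ (H1 eps) (H2 eps)).
    apply filter_imp. intros x Hx. exact Hx.
Qed.

Lemma filterlim_Cplus (f g : T -> C) a b :
  filterlim f F (locally a) -> filterlim g F (locally b) ->
  filterlim (fun e => Cplus (f e) (g e)) F (locally (Cplus a b)).
Proof.
  rewrite !filterlim_C_split. intros [Ha1 Ha2] [Hb1 Hb2]. split; apply filterlim_Rplus; auto.
Qed.

Lemma filterlim_Copp (f : T -> C) a :
  filterlim f F (locally a) -> filterlim (fun e => Copp (f e)) F (locally (Copp a)).
Proof. rewrite !filterlim_C_split. intros [Ha1 Ha2]. split; apply filterlim_Ropp; auto. Qed.

Lemma filterlim_Cminus (f g : T -> C) a b :
  filterlim f F (locally a) -> filterlim g F (locally b) ->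
  filterlim (fun e => Cminus (f e) (g e)) F (locally (Cminus a b)).
Proof. intros Hf Hg. apply filterlim_Cplus; [exact Hf | exact (filterlim_Copp _ _ Hg)]. Qed.

Lemma filterlim_Cmult (f g : T -> C) a b :
  filterlim f F (locally a) -> filterlim g F (locally b) ->
  filterlim (fun e => Cmult (f e) (g e)) F (locally (Cmult a b)).
Proof.
  rewrite !filterlim_C_split. intros [Ha1 Ha2] [Hb1 Hb2]. split.
  - apply filterlim_Rminus; apply filterlim_Rmult; auto.
  - apply filterlim_Rplus; apply filterlim_Rmult; auto.
Qed.

Lemma filterlim_RtoC (u : T -> R) l :
  filterlim u F (locally l) -> filterlim (fun e => RtoC (u e)) F (locally (RtoC l)).
Proof. rewrite filterlim_C_split. intros Hu. split; [exact Hu | apply filterlim_const]. Qed.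

Lemma filterlim_Cconj (f : T -> C) a :
  filterlim f F (locally a) -> filterlim (fun e => Cconj (f e)) F (locally (Cconj a)).
Proof.
  rewrite !filterlim_C_split. intros [Ha1 Ha2]. split; [exact Ha1 | exact (filterlim_Ropp _ _ Ha2)].
Qed.

Lemma filterlim_Cinv (f : T -> C) a :
  a <> RtoC 0 -> filterlim f F (locally a) -> filterlim (fun e => Cinv (f e)) F (locally (Cinv a)).
Proof.
  intros Ha. rewrite !filterlim_C_split. intros [Ha1 Ha2].
  assert (Hn : Re a ^ 2 + Im a ^ 2 <> 0).
  { destruct a as [x y]. simpl. intro H. apply Ha.
    assert (x = 0) by nra. assert (y = 0) by nra. subst. reflexivity. }
  assert (Hd : filterlim (fun e => / (Re (f e) ^ 2 + Im (f e) ^ 2)) F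
                 (locally (/ (Re a ^ 2 + Im a ^ 2)))).
  { apply filterlim_Rinv; [exact Hn|].
    apply filterlim_Rplus; apply filterlim_Rmult; auto; apply filterlim_Rmult; auto;
      apply filterlim_const. }
  split; unfold Cinv, Rdiv; simpl; apply filterlim_Rmult; auto.
  apply filterlim_Ropp; exact Ha2.
Qed.

Lemma filterlim_Cdiv (f g : T -> C) a b :
  b <> RtoC 0 -> filterlim f F (locally a) -> filterlim g F (locally b) ->
  filterlim (fun e => Cdiv (f e) (g e)) F (locally (Cdiv a b)).
Proof. intros Hb Hf Hg. apply filterlim_Cmult; [exact Hf | exact (filterlim_Cinv _ _ Hb Hg)]. Qed.

Lemma filterlim_cexp (f : T -> C) a :
  filterlim f F (locally a) -> filterlim (fun e => cexp (f e)) F (locally (cexp a)).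
Proof.
  assert (Hexp : forall x, continuity_pt exp x)
    by (intros; apply derivable_continuous_pt, derivable_pt_exp).
  rewrite !filterlim_C_split. intros [Ha1 Ha2]. unfold cexp; simpl.
  split; apply filterlim_Rmult; apply filterlim_continuity_pt; auto.
  - apply continuity_cos.
  - apply continuity_sin.
Qed.

Lemma filterlim_csum n (G : T -> nat -> C) (L : nat -> C) :
  (forall i, (i < n)%nat -> filterlim (fun e => G e i) F (locally (L i))) ->
  filterlim (fun e => csum n (G e)) F (locally (csum n L)).
Proof.
  induction n as [|n IH]; intros H; simpl; [apply filterlim_const|].
  apply filterlim_Cplus; [apply IH; intros; apply H; lia | apply H; lia].
Qed.

End FilterlimC.

Lemma Rlt_Rmin_inv e a b : e < Rmin a b -> e < a /\ e < b.
Proof. intros H. apply Rmin_Rgt, H. Qed.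

Lemma cv0_R_eps (u : R -> R) l :
  cv0 u l <->
  forall eps, 0 < eps -> exists d, 0 < d /\ forall e, 0 < e < d -> Rabs (u e - l) < eps.
Proof.
  unfold cv0. rewrite filterlim_locally. split.
  - intros H eps Heps. destruct (H (mkposreal eps Heps)) as [d Hd].
    exists d; split; [apply cond_pos|]. intros e He. apply (Hd e); [|lra].
    unfold ball; simpl; unfold AbsRing_ball, abs, minus, plus, opp; simpl.
    rewrite Rabs_right; lra.
  - intros H eps. destruct (H eps (cond_pos eps)) as [d [Hd H']].
    exists (mkposreal d Hd). intros y Hy Hy0. apply H'. split; [exact Hy0|].
    unfold ball in Hy; simpl in Hy; unfold AbsRing_ball, abs, minus, plus, opp in Hy; simpl in Hy.
    rewrite Rabs_right in Hy; lra.
Qed.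

Lemma im_le_Cmod (z : C) : Rabs (Im z) <= Cmod z.
Proof.
  destruct z as [x y]. unfold Cmod; simpl. rewrite <- sqrt_Rsqr_abs.
  apply sqrt_le_1_alt. unfold Rsqr; nra.
Qed.

Lemma Cmod_le_Re_Im (z : C) : Cmod z <= Rabs (Re z) + Rabs (Im z).
Proof.
  destruct z as [x y]. unfold Cmod; simpl. apply Rsqr_incr_0_var.
  - rewrite Rsqr_sqrt by nra. unfold Rsqr. rewrite !Rmult_1_r.
    assert (Rabs x * Rabs x = x * x) by (rewrite <- Rabs_mult; apply Rabs_right; nra).
    assert (Rabs y * Rabs y = y * y) by (rewrite <- Rabs_mult; apply Rabs_right; nra).
    generalize (Rabs_pos x) (Rabs_pos y). nra.
  - generalize (Rabs_pos x) (Rabs_pos y). lra.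
Qed.

Lemma cv0_C_eps (f : R -> C) l :
  cv0 f l <->
  forall eps, 0 < eps -> exists d, 0 < d /\ forall e, 0 < e < d -> Cmod (Cminus (f e) l) < eps.
Proof.
  transitivity (cv0 (fun e => Re (f e)) (Re l) /\ cv0 (fun e => Im (f e)) (Im l));
    [apply filterlim_C_split|].
  rewrite !cv0_R_eps. split.
  - intros [H1 H2] eps Heps.
    destruct (H1 (eps / 2)) as [d1 [Hd1 H1']]; [lra|].
    destruct (H2 (eps / 2)) as [d2 [Hd2 H2']]; [lra|].
    exists (Rmin d1 d2); split; [apply Rmin_pos; auto|]. intros e He.
    destruct (Rlt_Rmin_inv e d1 d2 (proj2 He)) as [He1 He2].
    specialize (H1' e ltac:(lra)). specialize (H2' e ltac:(lra)).
    eapply Rle_lt_trans; [apply Cmod_le_Re_Im|]. unfold Re, Im, Rminus in *. simpl. lra.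
  - intros H. split; intros eps Heps; destruct (H eps Heps) as [d [Hd H']];
      exists d; split; auto; intros e He; specialize (H' e He).
    + generalize (re_le_Cmod (Cminus (f e) l)). unfold Re, Rminus. simpl. lra.
    + generalize (im_le_Cmod (Cminus (f e) l)). unfold Im, Rminus. simpl. lra.
Qed.

Lemma exp_neg_taylor1_ge y : 0 <= exp (- y) - 1 + y.
Proof. generalize (exp_ineq1_le (- y)). lra. Qed.

Lemma exp_neg_taylor2_le y : 0 <= y -> exp (- y) - 1 + y <= y ^ 2 / 2.
Proof.
  intros Hy. destruct (Req_dec y 0) as [->|Hy0]; [rewrite Ropp_0, exp_0; lra|].
  set (h := fun t => exp (- t) - 1 + t - t ^ 2 / 2).
  destruct (MVT_gen h 0 y (fun t => - exp (- t) + 1 - t)) as [c [Hc Hm]].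
  - intros x _. unfold h. auto_derive; auto. field.
  - intros x _. apply derivable_continuous_pt, ex_derive_Reals_0. unfold h. auto_derive; auto.
  - rewrite Rmin_left, Rmax_right in Hc by lra. unfold h in Hm.
    rewrite Ropp_0, exp_0 in Hm. generalize (exp_neg_taylor1_ge c). nra.
Qed.

Lemma exp_neg_taylor3_ge y : 0 <= y -> y ^ 2 / 2 - y ^ 3 / 6 <= exp (- y) - 1 + y.
Proof.
  intros Hy. destruct (Req_dec y 0) as [->|Hy0]; [rewrite Ropp_0, exp_0; lra|].
  set (h := fun t => exp (- t) - 1 + t - t ^ 2 / 2 + t ^ 3 / 6).
  destruct (MVT_gen h 0 y (fun t => - exp (- t) + 1 - t + t ^ 2 / 2)) as [c [Hc Hm]].
  - intros x _. unfold h. auto_derive; auto. field.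
  - intros x _. apply derivable_continuous_pt, ex_derive_Reals_0. unfold h. auto_derive; auto.
  - rewrite Rmin_left, Rmax_right in Hc by lra. unfold h in Hm.
    rewrite Ropp_0, exp_0 in Hm. generalize (exp_neg_taylor2_le c ltac:(lra)). nra.
Qed.

(* [e^{-2 mu s} = 1 - mu * decay_quot mu s]: this is the factor by which
   [e^{-(2 lam + conj lam) s}] differs from [e^{-lam s}] when [lam = mu + i om].
   It tends to [2 s] as [mu -> 0+]. *)
Definition decay_quot (m s : R) : R := (1 - exp (- (2 * m * s))) / m.

Lemma decay_quot_bound m s : 0 < m -> 0 <= s -> Rabs (decay_quot m s - 2 * s) <= 2 * m * s ^ 2.
Proof.
  intros Hm Hs. unfold decay_quot.
  destruct (Req_dec s 0) as [->|Hs0].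
  { rewrite Rmult_0_r, Ropp_0, exp_0. replace ((1 - 1) / m - 2 * 0) with 0 by (field; lra).
    rewrite Rabs_R0. lra. }
  set (y := 2 * m * s). assert (Hy : 0 < y) by (unfold y; nra).
  replace ((1 - exp (- y)) / m - 2 * s) with (- (2 * s) * ((exp (- y) - 1 + y) / y))
    by (unfold y; field; lra).
  rewrite Rabs_mult, Rabs_Ropp, !Rabs_right.
  - apply Rmult_le_reg_r with y; [exact Hy|].
    replace (2 * s * ((exp (- y) - 1 + y) / y) * y) with (2 * s * (exp (- y) - 1 + y))
      by (field; lra).
    generalize (exp_neg_taylor2_le y ltac:(lra)). unfold y. nra.
  - apply Rle_ge, Rdiv_le_0_compat; [apply exp_neg_taylor1_ge | exact Hy].
  - lra.
Qed.

Definition taylor2_quot (y : R) : R := (exp (- y) - 1 + y) / y ^ 2.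

Lemma taylor2_quot_bound y : 0 < y -> Rabs (taylor2_quot y - 1 / 2) <= y / 6.
Proof.
  intros Hy. unfold taylor2_quot.
  generalize (exp_neg_taylor3_ge y ltac:(lra)) (exp_neg_taylor2_le y ltac:(lra)). intros Hl Hu.
  assert (Hy2 : 0 < y ^ 2) by (apply pow_lt; exact Hy).
  replace ((exp (- y) - 1 + y) / y ^ 2 - 1 / 2) with ((exp (- y) - 1 + y - y ^ 2 / 2) / y ^ 2)
    by (field; lra).
  rewrite Rabs_div by lra. rewrite (Rabs_right (y ^ 2)) by lra.
  apply Rmult_le_reg_r with (y ^ 2); [exact Hy2|].
  replace (Rabs (exp (- y) - 1 + y - y ^ 2 / 2) / y ^ 2 * y ^ 2)
    with (Rabs (exp (- y) - 1 + y - y ^ 2 / 2)) by (field; lra).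
  apply Rabs_le. split; nra.
Qed.

Lemma csum_ext n f g : (forall i, (i < n)%nat -> f i = g i) -> csum n f = csum n g.
Proof.
  induction n as [|n IH]; intros H; simpl; [reflexivity|].
  rewrite IH by (intros; apply H; lia). rewrite H by lia. reflexivity.
Qed.

Lemma csum0 n : csum n (fun _ => RtoC 0) = RtoC 0.
Proof. induction n as [|n IH]; simpl; [reflexivity|]. rewrite IH. ring. Qed.

Lemma csum_plus n f g : csum n (fun i => Cplus (f i) (g i)) = Cplus (csum n f) (csum n g).
Proof. induction n as [|n IH]; simpl; [ring|]. rewrite IH. ring. Qed.

Lemma csum_scal n c f : csum n (fun i => Cmult c (f i)) = Cmult c (csum n f).
Proof. induction n as [|n IH]; simpl; [ring|]. rewrite IH. ring. Qed.

Lemma csum_minus n f g : csum n (fun i => Cminus (f i) (g i)) = Cminus (csum n f) (csum n g).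
Proof. induction n as [|n IH]; simpl; [ring|]. rewrite IH. ring. Qed.

Lemma csum_conj n f : Cconj (csum n f) = csum n (fun i => Cconj (f i)).
Proof.
  induction n as [|n IH]; simpl; [apply injective_projections; simpl; ring|].
  rewrite Cplus_conj, IH. reflexivity.
Qed.

Lemma csum_swap n m (G : nat -> nat -> C) :
  csum n (fun i => csum m (fun j => G i j)) = csum m (fun j => csum n (fun i => G i j)).
Proof.
  induction n as [|n IH]; simpl; [rewrite csum0; reflexivity|].
  rewrite IH, <- csum_plus. reflexivity.
Qed.

Lemma csum_idm_r n (u : cvec) j : (j < n)%nat -> csum n (fun i => Cmult (u i) (idm i j)) = u j.
Proof.
  induction n as [|n IH]; intros Hj; [lia|]. simpl. unfold idm at 2.
  destruct (Nat.eqb_spec n j) as [Hnj|Hne].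
  - subst j. rewrite (csum_ext n _ (fun _ => RtoC 0)), csum0; [ring|].
    intros i Hi. unfold idm. destruct (Nat.eqb_spec i n); [lia | ring].
  - rewrite IH by lia. ring.
Qed.

Lemma cexp_plus a b : cexp (Cplus a b) = Cmult (cexp a) (cexp b).
Proof.
  destruct a as [x y], b as [u v]. unfold cexp; simpl.
  rewrite exp_plus, cos_plus, sin_plus. apply injective_projections; simpl; ring.
Qed.

Lemma cexp_RtoC x : cexp (RtoC x) = RtoC (exp x).
Proof. unfold cexp; simpl. rewrite cos_0, sin_0. apply injective_projections; simpl; ring. Qed.

Lemma cexp_conj z : cexp (Cconj z) = Cconj (cexp z).
Proof.
  destruct z as [x y]. unfold cexp; simpl. rewrite cos_neg, sin_neg.
  apply injective_projections; simpl; ring.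
Qed.

Lemma Cmod_cexp z : Cmod (cexp z) = exp (Re z).
Proof.
  destruct z as [x y]. unfold cexp, Cmod; simpl.
  replace (exp x * cos y * (exp x * cos y * 1) + exp x * sin y * (exp x * sin y * 1))
    with (exp x * exp x * (Rsqr (sin y) + Rsqr (cos y))) by (unfold Rsqr; ring).
  rewrite sin2_cos2, Rmult_1_r. apply sqrt_square, Rlt_le, exp_pos.
Qed.

Lemma dot_vadd n u x y : dot n u (vadd x y) = Cplus (dot n u x) (dot n u y).
Proof. unfold dot, vadd. rewrite <- csum_plus. apply csum_ext. intros; ring. Qed.

Lemma dot_vsub n u x y : dot n u (vsub x y) = Cminus (dot n u x) (dot n u y).
Proof. unfold dot, vsub. rewrite <- csum_minus. apply csum_ext. intros; ring. Qed.

Lemma dot_vscal_r n u c x : dot n u (vscal c x) = Cmult c (dot n u x).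
Proof. unfold dot, vscal. rewrite <- csum_scal. apply csum_ext. intros; ring. Qed.

Lemma dot_vscal_l n u c x : dot n (vscal c u) x = Cmult c (dot n u x).
Proof. unfold dot, vscal. rewrite <- csum_scal. apply csum_ext. intros; ring. Qed.

Lemma vm_vscal n c u M j : vm n (vscal c u) M j = Cmult c (vm n u M j).
Proof. unfold vm, vscal. rewrite <- csum_scal. apply csum_ext. intros; ring. Qed.

Lemma dot_mv n u M v : dot n u (mv n M v) = dot n (vm n u M) v.
Proof.
  unfold dot, mv, vm.
  rewrite (csum_ext n _ (fun i => csum n (fun j => Cmult (Cmult (u i) (M i j)) (v j))))
    by (intros i _; rewrite <- csum_scal; apply csum_ext; intros; ring).
  rewrite csum_swap. apply csum_ext. intros j _.
  rewrite (Cmult_comm (csum _ _)), <- csum_scal. apply csum_ext. intros; ring.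
Qed.

Definition ccont_on (r : R) (f : R -> C) : Prop :=
  forall th, -r <= th <= 0 ->
    filterlim f (within (fun t => -r <= t <= 0) (locally th)) (locally (f th)).

Lemma cont_on_ccont_on n r w i : (i < n)%nat -> cont_on n r w -> ccont_on r (fun t => w t i).
Proof. intros Hi H th Hth. exact (H i th Hi Hth). Qed.

Section ContinuityOnSegment.

Variable r : R.
Hypothesis Hr : 0 <= r.

(* Extending a function on [-r, 0] by constants makes it continuous on R, so that
   Stdlib's results on continuous functions apply. *)
Definition clamp (t : R) : R := Rmax (- r) (Rmin 0 t).

Lemma clamp_in t : -r <= clamp t <= 0.
Proof. unfold clamp, Rmax, Rmin. repeat destruct Rle_dec; lra. Qed.

Lemma clamp_id t : -r <= t <= 0 -> clamp t = t.
Proof. unfold clamp, Rmax, Rmin. repeat destruct Rle_dec; lra. Qed.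

Lemma continuity_pt_clamp (g : R -> R) :
  (forall th, -r <= th <= 0 ->
     filterlim g (within (fun t => -r <= t <= 0) (locally th)) (locally (g th))) ->
  forall t, continuity_pt (fun x => g (clamp x)) t.
Proof.
  intros H t. apply continuity_pt_filterlim.
  eapply filterlim_comp; [|apply H, clamp_in].
  intros P [eps He]. exists eps. intros y Hy. apply He; [|apply clamp_in].
  revert Hy. unfold ball; simpl; unfold AbsRing_ball, abs, minus, plus, opp; simpl.
  unfold clamp, Rmax, Rmin. repeat destruct Rle_dec; split_Rabs; lra.
Qed.

Lemma ccont_on_components (f : R -> C) :
  ccont_on r f ->
  (forall t, continuity_pt (fun x => Re (f (clamp x))) t) /\
  (forall t, continuity_pt (fun x => Im (f (clamp x))) t).
Proof.
  intros H. split; apply (continuity_pt_clamp (fun x => _ (f x)));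
    intros th Hth; apply (proj1 (filterlim_C_split _ _) (H th Hth)).
Qed.

Lemma ccont_on_ex_RInt (f : R -> C) :
  ccont_on r f -> ex_RInt (fun t => Re (f t)) (-r) 0 /\ ex_RInt (fun t => Im (f t)) (-r) 0.
Proof.
  intros H. destruct (ccont_on_components f H) as [H1 H2].
  split; [apply (ex_RInt_ext (fun x => Re (f (clamp x))))
         | apply (ex_RInt_ext (fun x => Im (f (clamp x))))];
    try (intros x Hx; rewrite Rmin_left, Rmax_right in Hx by lra; rewrite clamp_id; lra);
    apply (ex_RInt_continuous (V := R_CompleteNormedModule)); intros z _;
    apply continuity_pt_filterlim; auto.
Qed.

Lemma ccont_on_bounded (f : R -> C) :
  ccont_on r f -> exists M, forall t, -r <= t <= 0 -> Cmod (f t) <= M.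
Proof.
  intros H. destruct (ccont_on_components f H) as [H1 H2].
  assert (Hbd : forall g : R -> R, (forall t, continuity_pt g t) ->
            exists M, forall t, -r <= t <= 0 -> Rabs (g t) <= M).
  { intros g Hg.
    destruct (continuity_ab_maj g (-r) 0 ltac:(lra)) as [M1 [HM1 _]]; [intros; apply Hg|].
    destruct (continuity_ab_maj (fun x => - g x) (-r) 0 ltac:(lra)) as [M2 [HM2 _]];
      [intros; apply continuity_pt_opp, Hg|].
    exists (Rmax (g M1) (- g M2)). intros t Ht. specialize (HM1 t Ht). specialize (HM2 t Ht).
    unfold Rmax; destruct Rle_dec; split_Rabs; lra. }
  destruct (Hbd _ H1) as [M1 HM1]. destruct (Hbd _ H2) as [M2 HM2].
  exists (M1 + M2). intros t Ht. eapply Rle_trans; [apply Cmod_le_Re_Im|].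
  specialize (HM1 t Ht). specialize (HM2 t Ht). rewrite clamp_id in HM1, HM2 by exact Ht. lra.
Qed.

End ContinuityOnSegment.

Lemma ccont_on_plus r f g : ccont_on r f -> ccont_on r g -> ccont_on r (fun t => Cplus (f t) (g t)).
Proof. intros Hf Hg th Hth. apply filterlim_Cplus; auto. Qed.

Lemma ccont_on_minus r f g :
  ccont_on r f -> ccont_on r g -> ccont_on r (fun t => Cminus (f t) (g t)).
Proof. intros Hf Hg th Hth. apply filterlim_Cminus; auto. Qed.

Lemma ccont_on_mult r f g : ccont_on r f -> ccont_on r g -> ccont_on r (fun t => Cmult (f t) (g t)).
Proof. intros Hf Hg th Hth. apply filterlim_Cmult; auto. Qed.

Lemma ccont_on_const r (c : C) : ccont_on r (fun _ => c).
Proof. intros th Hth. apply filterlim_const. Qed.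

Lemma ccont_on_cexp r f : ccont_on r f -> ccont_on r (fun t => cexp (f t)).
Proof. intros Hf th Hth. apply filterlim_cexp; auto. Qed.

Lemma ccont_on_RtoC r (u : R -> R) : (forall t, ex_derive u t) -> ccont_on r (fun t => RtoC (u t)).
Proof.
  intros Hu th Hth. apply filterlim_RtoC.
  eapply filterlim_filter_le_1; [apply filter_le_within|].
  apply (ex_derive_continuous (K := R_AbsRing) (V := R_NormedModule)), Hu.
Qed.

Lemma ccont_on_csum r n (G : nat -> R -> C) :
  (forall i, (i < n)%nat -> ccont_on r (G i)) -> ccont_on r (fun t => csum n (fun i => G i t)).
Proof. intros H th Hth. apply filterlim_csum. intros i Hi. apply H; auto. Qed.

Section IntegralOnSegment.

Variable r : R.
Hypothesis Hr : 0 <= r.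

Lemma cint_ext f g : (forall t, -r <= t <= 0 -> f t = g t) -> cint f (-r) 0 = cint g (-r) 0.
Proof.
  intros H. unfold cint. f_equal; apply RInt_ext; intros x Hx;
    rewrite Rmin_left, Rmax_right in Hx by lra; rewrite H; auto; lra.
Qed.

Lemma RInt_lincomb (u v : R -> R) a b c d :
  ex_RInt u a b -> ex_RInt v a b ->
  RInt (fun t => c * u t + d * v t) a b = c * RInt u a b + d * RInt v a b.
Proof.
  intros Hu Hv.
  rewrite (RInt_plus (V := R_CompleteNormedModule) (fun t => c * u t) (fun t => d * v t)).
  - exact (f_equal2 Rplus (RInt_scal (V := R_CompleteNormedModule) u a b c Hu)
                          (RInt_scal (V := R_CompleteNormedModule) v a b d Hv)).
  - apply (ex_RInt_scal (V := R_NormedModule)); exact Hu.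
  - apply (ex_RInt_scal (V := R_NormedModule)); exact Hv.
Qed.

Lemma cint_plus f g : ccont_on r f -> ccont_on r g ->
  cint (fun t => Cplus (f t) (g t)) (-r) 0 = Cplus (cint f (-r) 0) (cint g (-r) 0).
Proof.
  intros Hf Hg.
  destruct (ccont_on_ex_RInt r Hr f Hf) as [F1 F2].
  destruct (ccont_on_ex_RInt r Hr g Hg) as [G1 G2].
  unfold cint. apply injective_projections; simpl;
    [ rewrite <- (Rmult_1_l (RInt (fun t => Re (f t)) _ _)),
              <- (Rmult_1_l (RInt (fun t => Re (g t)) _ _))
    | rewrite <- (Rmult_1_l (RInt (fun t => Im (f t)) _ _)),
              <- (Rmult_1_l (RInt (fun t => Im (g t)) _ _)) ];
    rewrite <- RInt_lincomb by assumption; apply RInt_ext; intros; unfold Re, Im; simpl; ring.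
Qed.

Lemma cint_scal c f : ccont_on r f ->
  cint (fun t => Cmult c (f t)) (-r) 0 = Cmult c (cint f (-r) 0).
Proof.
  intros Hf. destruct (ccont_on_ex_RInt r Hr f Hf) as [F1 F2].
  unfold cint. apply injective_projections; simpl.
  - replace (fst c * RInt (fun t => Re (f t)) (- r) 0 - snd c * RInt (fun t => Im (f t)) (- r) 0)
      with (fst c * RInt (fun t => Re (f t)) (- r) 0 + (- snd c) * RInt (fun t => Im (f t)) (- r) 0)
      by ring.
    rewrite <- RInt_lincomb by assumption. apply RInt_ext. intros; unfold Re, Im; simpl; ring.
  - replace (fst c * RInt (fun t => Im (f t)) (- r) 0 + snd c * RInt (fun t => Re (f t)) (- r) 0)
      with (snd c * RInt (fun t => Re (f t)) (- r) 0 + fst c * RInt (fun t => Im (f t)) (- r) 0)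
      by ring.
    rewrite <- RInt_lincomb by assumption. apply RInt_ext. intros; unfold Re, Im; simpl; ring.
Qed.

Lemma cint_minus f g : ccont_on r f -> ccont_on r g ->
  cint (fun t => Cminus (f t) (g t)) (-r) 0 = Cminus (cint f (-r) 0) (cint g (-r) 0).
Proof.
  intros Hf Hg.
  assert (Hg' : ccont_on r (fun t => Cmult (RtoC (-1)) (g t)))
    by (apply ccont_on_mult; [apply ccont_on_const | exact Hg]).
  transitivity (cint (fun t => Cplus (f t) (Cmult (RtoC (-1)) (g t))) (-r) 0).
  - apply cint_ext. intros; apply injective_projections; simpl; ring.
  - rewrite cint_plus, cint_scal by assumption. apply injective_projections; simpl; ring.
Qed.

Lemma cint_csum n (G : nat -> R -> C) : (forall i, (i < n)%nat -> ccont_on r (G i)) ->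
  cint (fun t => csum n (fun i => G i t)) (-r) 0 = csum n (fun i => cint (G i) (-r) 0).
Proof.
  induction n as [|n IH]; intros H; simpl.
  - unfold cint. simpl. rewrite !RInt_const.
    apply injective_projections; simpl; unfold scal; simpl; unfold mult; simpl; ring.
  - rewrite cint_plus, IH; [reflexivity | intros; apply H; lia | |apply H; lia].
    apply ccont_on_csum. intros; apply H; lia.
Qed.

Lemma dot_vint n u W : (forall i, (i < n)%nat -> ccont_on r (fun t => W t i)) ->
  dot n u (vint W (-r) 0) = cint (fun t => dot n u (W t)) (-r) 0.
Proof.
  intros H. unfold dot at 2. rewrite cint_csum.
  - apply csum_ext. intros i Hi. rewrite cint_scal by auto. reflexivity.
  - intros i Hi. apply ccont_on_mult; [apply ccont_on_const | apply H; exact Hi].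
Qed.

End IntegralOnSegment.

Lemma cexp_near_0 eta : 0 < eta ->
  exists rho, 0 < rho /\ forall z, Cmod z < rho -> Cmod (Cminus (cexp z) (RtoC 1)) < eta.
Proof.
  intros Heta.
  assert (Hc : filterlim cexp (locally (RtoC 0)) (locally (RtoC 1))).
  { rewrite <- exp_0, <- cexp_RtoC. apply (filterlim_cexp (fun z => z)), filterlim_id. }
  rewrite filterlim_locally in Hc. destruct (Hc (mkposreal (eta / 2) ltac:(lra))) as [rho Hrho].
  exists rho. split; [apply cond_pos|]. intros z Hz.
  destruct (Hrho z) as [H1 H2].
  { split; unfold ball; simpl; unfold AbsRing_ball, abs, minus, plus, opp; simpl;
      [generalize (re_le_Cmod z) | generalize (im_le_Cmod z)];
      unfold Re, Im; rewrite Ropp_0, Rplus_0_r; lra. }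
  revert H1 H2. unfold ball; simpl; unfold AbsRing_ball, abs, minus, plus, opp; simpl. intros H1 H2.
  eapply Rle_lt_trans; [apply Cmod_le_Re_Im|]. unfold Re, Im. simpl. lra.
Qed.

Definition cunif_cv (r : R) (G : R -> R -> C) (G0 : R -> C) : Prop :=
  forall eta, 0 < eta -> exists d, 0 < d /\
    forall e t, 0 < e < d -> -r <= t <= 0 -> Cmod (Cminus (G e t) (G0 t)) < eta.

Section UniformConvergence.

Variable r : R.
Hypothesis Hr : 0 <= r.

Lemma unif_cv_cunif_cv n w w0 i : (i < n)%nat -> unif_cv n r w w0 ->
  cunif_cv r (fun e t => w e t i) (fun t => w0 t i).
Proof.
  intros Hi H eta Heta. destruct (H eta Heta) as [d [Hd H']].
  exists d. split; [exact Hd|]. intros e t He Ht. apply H'; auto.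
Qed.

Lemma cunif_cv_cst (c : R -> C) L : cv0 c L -> cunif_cv r (fun e _ => c e) (fun _ => L).
Proof.
  intros H eta Heta. destruct (proj1 (cv0_C_eps c L) H eta Heta) as [d [Hd H']].
  exists d. split; [exact Hd|]. intros e t He _. exact (H' e He).
Qed.

Lemma cunif_cv_plus G H G0 H0 : cunif_cv r G G0 -> cunif_cv r H H0 ->
  cunif_cv r (fun e t => Cplus (G e t) (H e t)) (fun t => Cplus (G0 t) (H0 t)).
Proof.
  intros HG HH eta Heta.
  destruct (HG (eta / 2) ltac:(lra)) as [d1 [Hd1 H1]].
  destruct (HH (eta / 2) ltac:(lra)) as [d2 [Hd2 H2]].
  exists (Rmin d1 d2). split; [apply Rmin_pos; auto|]. intros e t He Ht.
  destruct (Rlt_Rmin_inv e d1 d2 (proj2 He)) as [He1 He2].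
  specialize (H1 e t ltac:(lra) Ht). specialize (H2 e t ltac:(lra) Ht).
  replace (Cminus (Cplus (G e t) (H e t)) (Cplus (G0 t) (H0 t)))
    with (Cplus (Cminus (G e t) (G0 t)) (Cminus (H e t) (H0 t))) by ring.
  eapply Rle_lt_trans; [apply Cmod_triangle | lra].
Qed.

Lemma cunif_cv_mult G H G0 H0 : ccont_on r G0 -> ccont_on r H0 ->
  cunif_cv r G G0 -> cunif_cv r H H0 ->
  cunif_cv r (fun e t => Cmult (G e t) (H e t)) (fun t => Cmult (G0 t) (H0 t)).
Proof.
  intros CG CH HG HH eta Heta.
  destruct (ccont_on_bounded r Hr G0 CG) as [MG HMG].
  destruct (ccont_on_bounded r Hr H0 CH) as [MH HMH].
  set (K := 1 + Rabs MG + Rabs MH).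
  assert (HK : 1 <= K) by (unfold K; generalize (Rabs_pos MG) (Rabs_pos MH); lra).
  set (h := Rmin 1 (eta / K)).
  assert (Hh : 0 < h) by (apply Rmin_pos; [lra | apply Rdiv_lt_0_compat; lra]).
  assert (Hh1 : h <= 1) by apply Rmin_l.
  assert (HhK : h * K <= eta).
  { assert (h <= eta / K) by apply Rmin_r.
    apply Rmult_le_compat_r with (r := K) in H1; [|lra].
    unfold Rdiv in H1. rewrite Rmult_assoc, Rinv_l in H1 by lra. lra. }
  destruct (HG h Hh) as [d1 [Hd1 H1]]. destruct (HH h Hh) as [d2 [Hd2 H2]].
  exists (Rmin d1 d2). split; [apply Rmin_pos; auto|]. intros e t He Ht.
  destruct (Rlt_Rmin_inv e d1 d2 (proj2 He)) as [He1 He2].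
  specialize (H1 e t ltac:(lra) Ht). specialize (H2 e t ltac:(lra) Ht).
  specialize (HMG t Ht). specialize (HMH t Ht).
  set (a := Cminus (G e t) (G0 t)) in *. set (b := Cminus (H e t) (H0 t)) in *.
  replace (Cminus (Cmult (G e t) (H e t)) (Cmult (G0 t) (H0 t)))
    with (Cplus (Cplus (Cmult a b) (Cmult a (H0 t))) (Cmult (G0 t) b)) by (unfold a, b; ring).
  eapply Rle_lt_trans; [apply Cmod_triangle|].
  eapply Rle_lt_trans; [apply Rplus_le_compat_r, Cmod_triangle|].
  rewrite !Cmod_mult.
  generalize (Cmod_ge_0 a) (Cmod_ge_0 b) (Cmod_ge_0 (G0 t)) (Cmod_ge_0 (H0 t)).
  generalize (RRle_abs MG) (RRle_abs MH). unfold K in HhK. intros. nra.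
Qed.

Lemma cunif_cv_csum n (G : nat -> R -> R -> C) G0 :
  (forall i, (i < n)%nat -> cunif_cv r (G i) (G0 i)) ->
  cunif_cv r (fun e t => csum n (fun i => G i e t)) (fun t => csum n (fun i => G0 i t)).
Proof.
  induction n as [|n IH]; intros H; simpl.
  - intros eta Heta. exists 1. split; [lra|]. intros e t _ _.
    replace (Cminus (RtoC 0) (RtoC 0)) with (RtoC 0) by ring. rewrite Cmod_0. exact Heta.
  - apply cunif_cv_plus; [apply IH; intros; apply H; lia | apply H; lia].
Qed.

End UniformConvergence.

Lemma cv0_cint r G G0 : 0 < r ->
  (exists d, 0 < d /\ forall e, 0 < e < d -> ccont_on r (G e)) -> ccont_on r G0 ->
  cunif_cv r G G0 -> cv0 (fun e => cint (G e) (-r) 0) (cint G0 (-r) 0).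
Proof.
  intros Hr [d0 [Hd0 HG]] HG0 HU. apply cv0_C_eps. intros eta Heta.
  destruct (HU (eta / (4 * r))) as [d [Hd H]]; [apply Rdiv_lt_0_compat; lra|].
  exists (Rmin d d0). split; [apply Rmin_pos; auto|]. intros e He.
  destruct (Rlt_Rmin_inv e d d0 (proj2 He)) as [He1 He2].
  assert (Ce : ccont_on r (G e)) by (apply HG; lra).
  rewrite <- cint_minus by (auto; lra).
  destruct (ccont_on_ex_RInt r ltac:(lra) _ (ccont_on_minus r _ _ Ce HG0)) as [E1 E2].
  eapply Rle_lt_trans; [apply Cmod_le_Re_Im|]. unfold cint; cbn [Re Im fst snd].
  assert (B1 : Rabs (RInt (fun t => Re (Cminus (G e t) (G0 t))) (-r) 0)
               <= (0 - - r) * (eta / (4 * r))).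
  { apply abs_RInt_le_const; [lra | exact E1|]. intros t Ht.
    eapply Rle_trans; [apply re_le_Cmod | apply Rlt_le, H; auto; lra]. }
  assert (B2 : Rabs (RInt (fun t => Im (Cminus (G e t) (G0 t))) (-r) 0)
               <= (0 - - r) * (eta / (4 * r))).
  { apply abs_RInt_le_const; [lra | exact E2|]. intros t Ht.
    eapply Rle_trans; [apply im_le_Cmod | apply Rlt_le, H; auto; lra]. }
  replace ((0 - - r) * (eta / (4 * r))) with (eta / 4) in B1, B2 by (field; lra).
  lra.
Qed.

Lemma ccont_on_cexp_scal r (u : R -> R) z : (forall t, ex_derive u t) ->
  ccont_on r (fun t => cexp (Cmult (RtoC (u t)) z)).
Proof.
  intros Hu. apply ccont_on_cexp, ccont_on_mult; [apply ccont_on_RtoC, Hu | apply ccont_on_const].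
Qed.

Lemma cunif_cv_cexp_scal r (lam : R -> C) lam0 : 0 <= r -> Re lam0 = 0 -> cv0 lam lam0 ->
  cunif_cv r (fun e t => cexp (Cmult (RtoC (- (t + r))) (lam e)))
             (fun t => cexp (Cmult (RtoC (- (t + r))) lam0)).
Proof.
  intros Hr H0 Hl eta Heta. destruct (cexp_near_0 eta Heta) as [rho [Hrho Hc]].
  destruct (proj1 (cv0_C_eps lam lam0) Hl (rho / (r + 1))) as [d [Hd H]];
    [apply Rdiv_lt_0_compat; lra|].
  exists d. split; [exact Hd|]. intros e t He Ht.
  set (z0 := Cmult (RtoC (- (t + r))) lam0).
  set (dz := Cmult (RtoC (- (t + r))) (Cminus (lam e) lam0)).
  replace (Cmult (RtoC (- (t + r))) (lam e)) with (Cplus z0 dz) by (unfold z0, dz; ring).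
  rewrite cexp_plus.
  replace (Cminus (Cmult (cexp z0) (cexp dz)) (cexp z0))
    with (Cmult (cexp z0) (Cminus (cexp dz) (RtoC 1))) by ring.
  rewrite Cmod_mult, Cmod_cexp.
  replace (Re z0) with 0 by (unfold z0, Re in *; simpl; rewrite H0; ring).
  rewrite exp_0, Rmult_1_l. apply Hc. unfold dz. rewrite Cmod_mult, Cmod_R.
  specialize (H e He). rewrite Rabs_left1 by lra.
  generalize (Cmod_ge_0 (Cminus (lam e) lam0)). intros.
  assert (rho / (r + 1) * (r + 1) = rho) by (field; lra).
  apply Rle_lt_trans with ((r + 1) * Cmod (Cminus (lam e) lam0)); nra.
Qed.

Section SmallPositiveParameter.

Variables (mu : R -> R) (eps0 : R).
Hypothesis Heps0 : 0 < eps0.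
Hypothesis Hmu_pos : forall e, 0 < e < eps0 -> 0 < mu e.
Hypothesis Hmu_cv : cv0 mu 0.

Lemma cunif_cv_decay_quot r : 0 <= r ->
  cunif_cv r (fun e t => RtoC (decay_quot (mu e) (t + r))) (fun t => RtoC (2 * (t + r))).
Proof.
  intros Hr eta Heta.
  destruct (proj1 (cv0_R_eps mu 0) Hmu_cv (eta / (2 * r ^ 2 + 1))) as [d [Hd H]];
    [apply Rdiv_lt_0_compat; nra|].
  exists (Rmin d eps0). split; [apply Rmin_pos; lra|]. intros e t He Ht.
  destruct (Rlt_Rmin_inv e d eps0 (proj2 He)) as [He1 He2].
  specialize (Hmu_pos e ltac:(lra)). specialize (H e ltac:(lra)).
  rewrite Rminus_0_r, Rabs_right in H by lra.
  replace (Cminus (RtoC (decay_quot (mu e) (t + r))) (RtoC (2 * (t + r))))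
    with (RtoC (decay_quot (mu e) (t + r) - 2 * (t + r)))
    by (apply injective_projections; simpl; ring).
  rewrite Cmod_R. eapply Rle_lt_trans; [apply decay_quot_bound; lra|].
  assert (mu e * (2 * r ^ 2 + 1) < eta).
  { apply Rmult_lt_compat_r with (r := 2 * r ^ 2 + 1) in H; [|nra].
    unfold Rdiv in H. rewrite Rmult_assoc, Rinv_l in H by nra. lra. }
  assert ((t + r) ^ 2 <= r ^ 2) by nra. nra.
Qed.

Lemma cv0_decay_quot r : 0 <= r -> cv0 (fun e => decay_quot (mu e) r) (2 * r).
Proof.
  intros Hr. apply cv0_R_eps. intros eta Heta.
  destruct (cunif_cv_decay_quot r Hr eta Heta) as [d [Hd H]].
  exists d. split; [exact Hd|]. intros e He. specialize (H e 0 He ltac:(lra)).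
  rewrite Rplus_0_l in H.
  replace (Cminus (RtoC (decay_quot (mu e) r)) (RtoC (2 * r)))
    with (RtoC (decay_quot (mu e) r - 2 * r)) in H by (apply injective_projections; simpl; ring).
  rewrite Cmod_R in H. exact H.
Qed.

Lemma cv0_taylor2_quot r : 0 < r -> cv0 (fun e => taylor2_quot (2 * mu e * r)) (1 / 2).
Proof.
  intros Hr. apply cv0_R_eps. intros eta Heta.
  destruct (proj1 (cv0_R_eps mu 0) Hmu_cv (eta / (r + 1))) as [d [Hd H]];
    [apply Rdiv_lt_0_compat; lra|].
  exists (Rmin d eps0). split; [apply Rmin_pos; lra|]. intros e He.
  destruct (Rlt_Rmin_inv e d eps0 (proj2 He)) as [He1 He2].
  specialize (Hmu_pos e ltac:(lra)). specialize (H e ltac:(lra)).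
  rewrite Rminus_0_r, Rabs_right in H by lra.
  eapply Rle_lt_trans; [apply taylor2_quot_bound; nra|].
  assert (mu e * (r + 1) < eta).
  { apply Rmult_lt_compat_r with (r := r + 1) in H; [|lra].
    unfold Rdiv in H. rewrite Rmult_assoc, Rinv_l in H by lra. lra. }
  nra.
Qed.

End SmallPositiveParameter.

Lemma Mmat_charmat A B r lam i j :
  Mmat A B r lam i j = charmat A B r (Cplus (Cmult (RtoC 2) lam) (Cconj lam)) i j.
Proof. unfold Mmat, charmat. apply injective_projections; simpl; ring. Qed.

Lemma vm_charmat n u A B r z j : (j < n)%nat ->
  vm n u (charmat A B r z) j =
  Cminus (Cminus (Cmult z (u j)) (vm n u (rtoc_mat A) j))
         (Cmult (cexp (Cmult (RtoC (- r)) z)) (vm n u (rtoc_mat B) j)).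
Proof.
  intros Hj. unfold vm, charmat, rtoc_mat.
  rewrite <- (csum_idm_r n u j Hj), <- !csum_scal, <- !csum_minus.
  apply csum_ext. intros; ring.
Qed.

Lemma mv_charmat_conj n A B r z v i :
  mv n (charmat A B r (Cconj z)) (fun k => Cconj (v k)) i = Cconj (mv n (charmat A B r z) v i).
Proof.
  unfold mv. rewrite csum_conj. apply csum_ext. intros j _. rewrite Cmult_conj. f_equal.
  unfold charmat. rewrite !Cminus_conj, !Cmult_conj, <- cexp_conj.
  replace (Cmult (RtoC (- r)) (Cconj z)) with (Cconj (Cmult (RtoC (- r)) z))
    by (apply injective_projections; simpl; ring).
  unfold idm. destruct (Nat.eqb i j); apply injective_projections; simpl; ring.
Qed.

Lemma vm_charmat_sub n u A B r z1 z2 j : (j < n)%nat ->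
  Cminus (vm n u (charmat A B r z1) j) (vm n u (charmat A B r z2) j) =
  Cminus (Cmult (Cminus z1 z2) (u j))
         (Cmult (Cminus (cexp (Cmult (RtoC (- r)) z1)) (cexp (Cmult (RtoC (- r)) z2)))
                (vm n u (rtoc_mat B) j)).
Proof. intros Hj. rewrite !vm_charmat by exact Hj. ring. Qed.

Lemma left_right_eigen_dot n A B r z1 z2 (u v : cvec) :
  (forall j, (j < n)%nat -> vm n u (charmat A B r z1) j = RtoC 0) ->
  (forall i, (i < n)%nat -> mv n (charmat A B r z2) v i = RtoC 0) ->
  Cmult (Cminus z1 z2) (dot n u v) =
  Cmult (Cminus (cexp (Cmult (RtoC (- r)) z1)) (cexp (Cmult (RtoC (- r)) z2)))
        (dot n u (mv n (rtoc_mat B) v)).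
Proof.
  intros Hu Hv.
  assert (H0 : dot n (vm n u (charmat A B r z2)) v = RtoC 0).
  { rewrite <- dot_mv. unfold dot. rewrite <- (csum0 n). apply csum_ext.
    intros i Hi. rewrite Hv by exact Hi. ring. }
  assert (H1 : dot n (vm n u (charmat A B r z2)) v =
               Cminus (Cmult (Cminus z2 z1) (dot n u v))
                      (Cmult (Cminus (cexp (Cmult (RtoC (- r)) z2)) (cexp (Cmult (RtoC (- r)) z1)))
                             (dot n u (mv n (rtoc_mat B) v)))).
  { rewrite dot_mv. unfold dot. rewrite <- !csum_scal, <- csum_minus. apply csum_ext. intros j Hj.
    transitivity (Cmult (Cminus (vm n u (charmat A B r z2) j) (vm n u (charmat A B r z1) j)) (v j));
      [rewrite (Hu j Hj); ring|].
    rewrite vm_charmat_sub by exact Hj. ring. }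
  transitivity (Cplus (Cmult (Cminus z1 z2) (dot n u v)) (RtoC 0)); [ring|].
  rewrite <- H0, H1. ring.
Qed.

Lemma cexp_shift mu om x : mu <> 0 ->
  cexp (Cmult (RtoC (- x)) (Cplus (Cmult (RtoC 2) (mu, om)) (Cconj (mu, om)))) =
  Cmult (cexp (Cmult (RtoC (- x)) (mu, om)))
        (Cminus (RtoC 1) (Cmult (RtoC mu) (RtoC (decay_quot mu x)))).
Proof.
  intros Hmu.
  replace (Cmult (RtoC (- x)) (Cplus (Cmult (RtoC 2) (mu, om)) (Cconj (mu, om))))
    with (Cplus (Cmult (RtoC (- x)) (mu, om)) (RtoC (- (2 * mu * x))))
    by (apply injective_projections; simpl; ring).
  rewrite cexp_plus, cexp_RtoC. f_equal. unfold decay_quot.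
  apply injective_projections; simpl; field; exact Hmu.
Qed.

Definition h1_value n (B : rmat) r mu om (P : cvec) (j : nat) : C :=
  Cplus (Cmult (RtoC 2) (P j))
        (Cmult (vm n P (rtoc_mat B) j)
               (Cmult (cexp (Cmult (RtoC (- r)) (mu, om))) (RtoC (decay_quot mu r)))).

Lemma vm_Mmat_left_eigen n A B r mu om (P : cvec) j : (j < n)%nat -> mu <> 0 ->
  vm n P (charmat A B r (mu, om)) j = RtoC 0 ->
  vm n P (Mmat A B r (mu, om)) j = Cmult (RtoC mu) (h1_value n B r mu om P j).
Proof.
  intros Hj Hmu H. unfold h1_value.
  assert (HM : vm n P (Mmat A B r (mu, om)) j =
               vm n P (charmat A B r (Cplus (Cmult (RtoC 2) (mu, om)) (Cconj (mu, om)))) j)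
    by (apply csum_ext; intros; rewrite Mmat_charmat; reflexivity).
  transitivity (Cminus (vm n P (Mmat A B r (mu, om)) j) (RtoC 0)); [ring|].
  rewrite <- H, HM, vm_charmat_sub, cexp_shift by assumption.
  replace (Cminus (Cplus (Cmult (RtoC 2) (mu, om)) (Cconj (mu, om))) (mu, om))
    with (Cmult (RtoC 2) (RtoC mu)) by (apply injective_projections; simpl; ring).
  ring.
Qed.

Lemma vm_Psi0_left_eigen n A B r lam (psi phi : cvec) j :
  vm n psi (charmat A B r lam) j = RtoC 0 ->
  vm n (Psi0 n B r lam psi phi) (charmat A B r lam) j = RtoC 0.
Proof. intros H. unfold Psi0. rewrite vm_vscal, H. ring. Qed.

Lemma Psi0_normalized n B r lam (psi phi : cvec) :
  Cplus (dot n psi phi)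
        (Cmult (Cmult (dot n psi (mv n (rtoc_mat B) phi)) (cexp (Cmult (RtoC (- r)) lam))) (RtoC r))
    <> RtoC 0 ->
  let P := Psi0 n B r lam psi phi in
  Cplus (dot n P phi)
        (Cmult (Cmult (dot n P (mv n (rtoc_mat B) phi)) (cexp (Cmult (RtoC (- r)) lam))) (RtoC r))
    = RtoC 1.
Proof. intros Hd P. unfold P, Psi0. rewrite !dot_vscal_l. field. exact Hd. Qed.

Lemma bilin_Psifun_eq0 n B r lam (P : cvec) w : 0 <= r ->
  bilin n B r (Psifun lam P) w = RtoC 0 ->
  dot n P (w 0) =
  Copp (cint (fun t => Cmult (cexp (Cmult (RtoC (- (t + r))) lam))
                             (dot n (vm n P (rtoc_mat B)) (w t))) (-r) 0).
Proof.
  intros Hr H. unfold bilin, Psifun in H. rewrite dot_vscal_l in H.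
  replace (Cmult (RtoC (- 0)) lam) with (RtoC 0) in H by (apply injective_projections; simpl; ring).
  rewrite cexp_RtoC, exp_0 in H.
  rewrite (cint_ext r Hr _ (fun t => Cmult (cexp (Cmult (RtoC (- (t + r))) lam))
                                       (dot n (vm n P (rtoc_mat B)) (w t)))) in H
    by (intros t _; rewrite dot_vscal_l, dot_mv; reflexivity).
  match type of H with Cplus ?X ?I = _ =>
    transitivity (Cminus (Cplus X I) I); [ring | rewrite H; ring] end.
Qed.

Definition wcomb n (u : cvec) (c20 c11 c02 : C) (w20 w11 w02 : R -> cvec) (t : R) : C :=
  Cplus (Cplus (Cmult c20 (dot n u (w20 t))) (Cmult c11 (dot n u (w11 t))))
        (Cmult c02 (dot n u (w02 t))).

Lemma ccont_on_dot n r u w : cont_on n r w -> ccont_on r (fun t => dot n u (w t)).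
Proof.
  intros H. apply ccont_on_csum. intros i Hi.
  apply ccont_on_mult; [apply ccont_on_const | apply (cont_on_ccont_on n); assumption].
Qed.

Lemma ccont_on_wcomb n r u c20 c11 c02 w20 w11 w02 :
  cont_on n r w20 -> cont_on n r w11 -> cont_on n r w02 ->
  ccont_on r (wcomb n u c20 c11 c02 w20 w11 w02).
Proof.
  intros H20 H11 H02. unfold wcomb.
  apply ccont_on_plus; [apply ccont_on_plus|];
    (apply ccont_on_mult; [apply ccont_on_const | apply ccont_on_dot; assumption]).
Qed.

Lemma cint_kernel_wcomb n r (K : R -> C) u c20 c11 c02 w20 w11 w02 : 0 <= r -> ccont_on r K ->
  cont_on n r w20 -> cont_on n r w11 -> cont_on n r w02 ->
  cint (fun t => Cmult (K t) (wcomb n u c20 c11 c02 w20 w11 w02 t)) (-r) 0 =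
  Cplus (Cplus (Cmult c20 (cint (fun t => Cmult (K t) (dot n u (w20 t))) (-r) 0))
               (Cmult c11 (cint (fun t => Cmult (K t) (dot n u (w11 t))) (-r) 0)))
        (Cmult c02 (cint (fun t => Cmult (K t) (dot n u (w02 t))) (-r) 0)).
Proof.
  intros Hr HK H20 H11 H02.
  assert (Hc : forall c w, cont_on n r w ->
            ccont_on r (fun t => Cmult c (Cmult (K t) (dot n u (w t)))))
    by (intros; apply ccont_on_mult; [apply ccont_on_const |];
        apply ccont_on_mult; [exact HK | apply ccont_on_dot; assumption]).
  rewrite (cint_ext r Hr _ (fun t => Cplus (Cplus (Cmult c20 (Cmult (K t) (dot n u (w20 t))))
                                                  (Cmult c11 (Cmult (K t) (dot n u (w11 t)))))
                                           (Cmult c02 (Cmult (K t) (dot n u (w02 t))))))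
    by (intros; unfold wcomb; ring).
  rewrite (cint_plus r Hr _ _ (ccont_on_plus r _ _ (Hc c20 w20 H20) (Hc c11 w11 H11))
                     (Hc c02 w02 H02)),
          (cint_plus r Hr _ _ (Hc c20 w20 H20) (Hc c11 w11 H11)).
  rewrite !cint_scal; [reflexivity | exact Hr | | exact Hr | | exact Hr |];
    (apply ccont_on_mult; [exact HK | apply ccont_on_dot; assumption]).
Qed.

(* The right-hand side is grouped into the three terms that the [*_bracket] lemmas below
   show to be divisible by [mu]. *)
Lemma dot_R1vec_R2vec n B r lam (P phi f21 : cvec) g20 g11 g02 g12 w20 w11 w02 : 0 <= r ->
  cont_on n r w20 -> cont_on n r w11 -> cont_on n r w02 ->
  bilin n B r (Psifun lam P) w20 = RtoC 0 ->
  bilin n B r (Psifun lam P) w11 = RtoC 0 ->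
  bilin n B r (Psifun lam P) w02 = RtoC 0 ->
  let g21 := dot n P f21 in
  let u := vm n P (rtoc_mat B) in
  let s := Cplus (Cmult (RtoC 2) lam) (Cconj lam) in
  let V := wcomb n u (Cmult (RtoC 2) g11) (Cplus g20 (Cmult (RtoC 2) (Cconj g11))) (Cconj g02)
                 w20 w11 w02 in
  let phic := fun i => Cconj (phi i) in
  dot n P (vsub (mv n (rtoc_mat B) (R1vec r lam phi g20 g11 g02 g21 g12 w20 w11 w02))
                (R2vec phi g20 g11 g02 g21 g12 f21 w20 w11 w02)) =
  Cplus
    (Cminus
       (Copp (Cmult g21
          (Cminus (Cplus (Cmult (Cdiv (Cminus (cexp (Cmult (RtoC (- r)) lam))
                                              (cexp (Cmult (RtoC (- r)) s)))
                                      (Cplus lam (Cconj lam))) (dot n u phi))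
                         (dot n P phi)) (RtoC 1))))
       (Cmult (Cconj g12)
          (Cplus (Cmult (Cdiv (Cminus (cexp (Cmult (RtoC (- r)) (Cconj lam)))
                                      (cexp (Cmult (RtoC (- r)) s)))
                              (Cmult (RtoC 2) lam)) (dot n u phic))
                 (dot n P phic))))
    (Cminus (cint (fun t => Cmult (cexp (Cmult (RtoC (- (t + r))) lam)) (V t)) (-r) 0)
            (Cmult (cexp (Cmult (RtoC (- r)) s))
                   (cint (fun t => Cmult (cexp (Cmult (RtoC (- t)) s)) (V t)) (-r) 0))).
Proof.
  intros Hr H20 H11 H02 O20 O11 O02 g21 u s V phic.
  apply bilin_Psifun_eq0 in O20, O11, O02; try exact Hr.
  unfold R1vec, R2vec. cbv zeta. fold s phic.
  rewrite dot_vsub, dot_mv. fold u.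
  rewrite !dot_vsub, !dot_vadd, !dot_vsub, !dot_vscal_r, !dot_vadd, !dot_vscal_r.
  fold u in O20, O11, O02. rewrite O20, O11, O02.
  rewrite dot_vint; [| exact Hr |].
  2:{ intros i Hi. unfold vscal, vadd. apply ccont_on_mult.
      - apply ccont_on_cexp_scal. intros; auto_derive; auto.
      - apply ccont_on_plus; [apply ccont_on_plus|];
          (apply ccont_on_mult; [apply ccont_on_const | apply (cont_on_ccont_on n); assumption]). }
  rewrite (cint_ext r Hr _ (fun t => Cmult (cexp (Cmult (RtoC (- t)) s)) (V t)))
    by (intros; rewrite dot_vscal_r, !dot_vadd, !dot_vscal_r; reflexivity).
  assert (HK : ccont_on r (fun t => cexp (Cmult (RtoC (- (t + r))) lam)))
    by (apply ccont_on_cexp_scal; intros; auto_derive; auto).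
  unfold V. rewrite (cint_kernel_wcomb n r _ u _ _ _ _ _ _ Hr HK H20 H11 H02).
  fold g21. unfold Cdiv. ring.
Qed.

Lemma normalization_bracket r mu om (p1 b1 : C) : r <> 0 -> mu <> 0 ->
  let lam := (mu, om) : C in
  let a := cexp (Cmult (RtoC (- r)) lam) in
  Cplus p1 (Cmult (Cmult b1 a) (RtoC r)) = RtoC 1 ->
  Cminus (Cplus (Cmult (Cdiv (Cminus a (cexp (Cmult (RtoC (- r))
                                              (Cplus (Cmult (RtoC 2) lam) (Cconj lam)))))
                             (Cplus lam (Cconj lam))) b1) p1) (RtoC 1) =
  Copp (Cmult (RtoC mu) (Cmult (Cmult b1 a) (RtoC (2 * r ^ 2 * taylor2_quot (2 * mu * r))))).
Proof.
  intros Hr Hmu lam a Hnorm. unfold lam. rewrite cexp_shift by exact Hmu. fold lam a.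
  replace p1 with (Cminus (RtoC 1) (Cmult (Cmult b1 a) (RtoC r))) by (rewrite <- Hnorm; ring).
  replace (Cplus lam (Cconj lam)) with (Cmult (RtoC 2) (RtoC mu))
    by (apply injective_projections; simpl; ring).
  replace (RtoC (2 * r ^ 2 * taylor2_quot (2 * mu * r)))
    with (Cdiv (Cminus (Cmult (RtoC 2) (RtoC r)) (RtoC (decay_quot mu r)))
               (Cmult (RtoC 2) (RtoC mu)))
    by (unfold taylor2_quot, decay_quot; apply injective_projections; simpl; field; lra).
  field. intro H. injection H. lra.
Qed.

Lemma conjugate_bracket r mu om (p2 b2 : C) : mu <> 0 -> om <> 0 ->
  let lam := (mu, om) : C in
  let a := cexp (Cmult (RtoC (- r)) lam) in
  let ac := cexp (Cmult (RtoC (- r)) (Cconj lam)) in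
  Cmult (Cminus lam (Cconj lam)) p2 = Cmult (Cminus a ac) b2 ->
  Cplus (Cmult (Cdiv (Cminus ac (cexp (Cmult (RtoC (- r))
                                       (Cplus (Cmult (RtoC 2) lam) (Cconj lam)))))
                     (Cmult (RtoC 2) lam)) b2) p2 =
  Cmult (RtoC mu) (Cmult b2 (Cplus (Cdiv (Cminus a ac) (Cmult lam (Cminus lam (Cconj lam))))
                                   (Cdiv (Cmult a (RtoC (decay_quot mu r))) (Cmult (RtoC 2) lam)))).
Proof.
  intros Hmu Hom lam a ac Heig. unfold lam. rewrite cexp_shift by exact Hmu. fold lam a.
  assert (Hd : Cminus lam (Cconj lam) <> RtoC 0) by (unfold lam; intro H; injection H; lra).
  assert (Hl : lam <> RtoC 0) by (unfold lam; intro H; injection H; lra).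
  replace p2 with (Cdiv (Cmult (Cminus a ac) b2) (Cminus lam (Cconj lam)))
    by (rewrite <- Heig; field; exact Hd).
  replace (Cconj lam) with (Cminus (Cmult (RtoC 2) (RtoC mu)) lam) in *
    by (apply injective_projections; simpl; ring).
  field. repeat split; auto; intro H; injection H; lra.
Qed.

Lemma kernel_bracket r mu om (V : R -> C) : 0 <= r -> mu <> 0 -> ccont_on r V ->
  let lam := (mu, om) : C in
  let s := Cplus (Cmult (RtoC 2) lam) (Cconj lam) in
  Cminus (cint (fun t => Cmult (cexp (Cmult (RtoC (- (t + r))) lam)) (V t)) (-r) 0)
         (Cmult (cexp (Cmult (RtoC (- r)) s))
                (cint (fun t => Cmult (cexp (Cmult (RtoC (- t)) s)) (V t)) (-r) 0)) =
  Cmult (RtoC mu) (cint (fun t => Cmult (Cmult (cexp (Cmult (RtoC (- (t + r))) lam))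
                                               (RtoC (decay_quot mu (t + r)))) (V t)) (-r) 0).
Proof.
  intros Hr Hmu HV lam s.
  assert (HK : ccont_on r (fun t => Cmult (cexp (Cmult (RtoC (- (t + r))) lam)) (V t))).
  { apply ccont_on_mult; [|exact HV]. apply ccont_on_cexp_scal. intros; auto_derive; auto. }
  assert (HS : ccont_on r (fun t => Cmult (cexp (Cmult (RtoC (- t)) s)) (V t))).
  { apply ccont_on_mult; [|exact HV]. apply ccont_on_cexp_scal. intros; auto_derive; auto. }
  assert (HQ : ccont_on r (fun t => Cmult (Cmult (cexp (Cmult (RtoC (- (t + r))) lam))
                                              (RtoC (decay_quot mu (t + r)))) (V t))).
  { apply ccont_on_mult; [|exact HV]. apply ccont_on_mult.
    - apply ccont_on_cexp_scal. intros; auto_derive; auto.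
    - apply ccont_on_RtoC. intros; unfold decay_quot; auto_derive; auto. }
  rewrite <- (cint_scal r Hr _ _ HS), <- (cint_scal r Hr _ _ HQ), <- cint_minus;
    [| exact Hr | exact HK |].
  - apply cint_ext; [exact Hr|]. intros t _. rewrite Cmult_assoc, <- cexp_plus.
    replace (Cplus (Cmult (RtoC (- r)) s) (Cmult (RtoC (- t)) s))
      with (Cmult (RtoC (- (t + r))) s) by (apply injective_projections; simpl; ring).
    unfold s, lam. rewrite cexp_shift by exact Hmu. ring.
  - apply ccont_on_mult; [apply ccont_on_const | exact HS].
Qed.

Definition h2_value (r mu om : R) (g21 g12 b1 b2 : C) (V : R -> C) : C :=
  let lam := (mu, om) : C in
  let a := cexp (Cmult (RtoC (- r)) lam) in
  let ac := cexp (Cmult (RtoC (- r)) (Cconj lam)) in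
  Cplus
    (Cminus (Cmult (Cmult (Cmult g21 b1) a) (RtoC (2 * r ^ 2 * taylor2_quot (2 * mu * r))))
            (Cmult (Cconj g12)
               (Cmult b2 (Cplus (Cdiv (Cminus a ac) (Cmult lam (Cminus lam (Cconj lam))))
                                (Cdiv (Cmult a (RtoC (decay_quot mu r))) (Cmult (RtoC 2) lam))))))
    (cint (fun t => Cmult (Cmult (cexp (Cmult (RtoC (- (t + r))) lam))
                                 (RtoC (decay_quot mu (t + r)))) (V t)) (-r) 0).

Lemma dot_R1vec_R2vec_factor n A B r mu om (psi phi f21 : cvec) g20 g11 g02 g12 w20 w11 w02 :
  0 < r -> mu <> 0 -> om <> 0 ->
  cont_on n r w20 -> cont_on n r w11 -> cont_on n r w02 ->
  Cplus (dot n psi phi)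
        (Cmult (Cmult (dot n psi (mv n (rtoc_mat B) phi)) (cexp (Cmult (RtoC (- r)) (mu, om))))
               (RtoC r)) <> RtoC 0 ->
  (forall j, (j < n)%nat -> vm n psi (charmat A B r (mu, om)) j = RtoC 0) ->
  (forall i, (i < n)%nat -> mv n (charmat A B r (mu, om)) phi i = RtoC 0) ->
  let lam := (mu, om) : C in
  let P := Psi0 n B r lam psi phi in
  bilin n B r (Psifun lam P) w20 = RtoC 0 ->
  bilin n B r (Psifun lam P) w11 = RtoC 0 ->
  bilin n B r (Psifun lam P) w02 = RtoC 0 ->
  let g21 := dot n P f21 in
  let u := vm n P (rtoc_mat B) in
  dot n P (vsub (mv n (rtoc_mat B) (R1vec r lam phi g20 g11 g02 g21 g12 w20 w11 w02))
                (R2vec phi g20 g11 g02 g21 g12 f21 w20 w11 w02)) =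
  Cmult (RtoC mu)
    (h2_value r mu om g21 g12 (dot n u phi) (dot n u (fun i => Cconj (phi i)))
       (wcomb n u (Cmult (RtoC 2) g11) (Cplus g20 (Cmult (RtoC 2) (Cconj g11))) (Cconj g02)
              w20 w11 w02)).
Proof.
  intros Hr Hmu Hom H20 H11 H02 Hden Hpsi Hphi lam P O20 O11 O02 g21 u.
  pose proof (dot_R1vec_R2vec n B r lam P phi f21 g20 g11 g02 g12 w20 w11 w02
                ltac:(lra) H20 H11 H02 O20 O11 O02) as Hexp.
  cbv zeta in Hexp. fold g21 u in Hexp. rewrite Hexp.
  assert (Hnorm := Psi0_normalized n B r lam psi phi Hden). cbv zeta in Hnorm. fold P in Hnorm.
  rewrite dot_mv in Hnorm. fold u in Hnorm.
  assert (Hconj : Cmult (Cminus lam (Cconj lam)) (dot n P (fun i => Cconj (phi i))) =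
                  Cmult (Cminus (cexp (Cmult (RtoC (- r)) lam))
                                (cexp (Cmult (RtoC (- r)) (Cconj lam))))
                        (dot n u (fun i => Cconj (phi i)))).
  { unfold u. rewrite <- dot_mv.
    apply (left_right_eigen_dot n A B r).
    - intros j Hj. apply vm_Psi0_left_eigen, Hpsi, Hj.
    - intros i Hi. rewrite mv_charmat_conj, Hphi by exact Hi.
      apply injective_projections; simpl; ring. }
  unfold lam. rewrite (normalization_bracket r mu om) by (lra || exact Hnorm).
  rewrite (conjugate_bracket r mu om) by (assumption || exact Hconj).
  rewrite (kernel_bracket r mu om) by (lra || assumption || apply ccont_on_wcomb; assumption).
  unfold h2_value. unfold Cdiv. ring.
Qed.

Section VectorLimits.

Variable n : nat.

Lemma cv0_dot (u v : R -> cvec) u0 v0 :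
  (forall i, (i < n)%nat -> cv0 (fun e => u e i) (u0 i)) ->
  (forall i, (i < n)%nat -> cv0 (fun e => v e i) (v0 i)) ->
  cv0 (fun e => dot n (u e) (v e)) (dot n u0 v0).
Proof.
  intros Hu Hv. apply filterlim_csum. intros i Hi.
  apply filterlim_Cmult; [apply Hu | apply Hv]; exact Hi.
Qed.

Lemma cv0_vm (u : R -> cvec) (M : R -> rmat) u0 M0 :
  (forall i, (i < n)%nat -> cv0 (fun e => u e i) (u0 i)) ->
  (forall i j, cv0 (fun e => M e i j) (M0 i j)) ->
  forall j, cv0 (fun e => vm n (u e) (rtoc_mat (M e)) j) (vm n u0 (rtoc_mat M0) j).
Proof.
  intros Hu HM j. apply filterlim_csum. intros i Hi.
  apply filterlim_Cmult; [apply Hu, Hi | apply filterlim_RtoC, HM].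
Qed.

Lemma cv0_mv (M : R -> rmat) (v : R -> cvec) M0 v0 :
  (forall i j, cv0 (fun e => M e i j) (M0 i j)) ->
  (forall i, (i < n)%nat -> cv0 (fun e => v e i) (v0 i)) ->
  forall i, cv0 (fun e => mv n (rtoc_mat (M e)) (v e) i) (mv n (rtoc_mat M0) v0 i).
Proof.
  intros HM Hv i. apply filterlim_csum. intros j Hj.
  apply filterlim_Cmult; [apply filterlim_RtoC, HM | apply Hv, Hj].
Qed.

Lemma cv0_cexp_scal x (lam : R -> C) lam0 :
  cv0 lam lam0 -> cv0 (fun e => cexp (Cmult (RtoC x) (lam e))) (cexp (Cmult (RtoC x) lam0)).
Proof. intros H. apply filterlim_cexp, filterlim_Cmult; [apply filterlim_const | exact H]. Qed.

Lemma cv0_Psi0 (Be : R -> rmat) B r (lam : R -> C) lam0 (psi phi : R -> cvec) psiu phiu :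
  (forall i j, cv0 (fun e => Be e i j) (B i j)) -> cv0 lam lam0 ->
  (forall i, (i < n)%nat -> cv0 (fun e => psi e i) (psiu i)) ->
  (forall i, (i < n)%nat -> cv0 (fun e => phi e i) (phiu i)) ->
  Cplus (dot n psiu phiu)
        (Cmult (Cmult (dot n psiu (mv n (rtoc_mat B) phiu)) (cexp (Cmult (RtoC (- r)) lam0)))
               (RtoC r)) <> RtoC 0 ->
  forall i, (i < n)%nat ->
    cv0 (fun e => Psi0 n (Be e) r (lam e) (psi e) (phi e) i) (Psi0 n B r lam0 psiu phiu i).
Proof.
  intros HB Hl Hpsi Hphi Hden i Hi. unfold Psi0, vscal.
  apply filterlim_Cmult; [apply filterlim_Cinv; [exact Hden|] | apply Hpsi, Hi].
  apply filterlim_Cplus; [apply cv0_dot; assumption|].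
  apply filterlim_Cmult; [|apply filterlim_const].
  apply filterlim_Cmult; [apply cv0_dot; [assumption | intros; apply cv0_mv; assumption] |].
  apply cv0_cexp_scal, Hl.
Qed.

Lemma cunif_cv_wcomb r (u : R -> cvec) u0 (c20 c11 c02 : R -> C) C20 C11 C02
  (w20 w11 w02 : R -> R -> cvec) w20u w11u w02u : 0 <= r ->
  (forall i, (i < n)%nat -> cv0 (fun e => u e i) (u0 i)) ->
  cv0 c20 C20 -> cv0 c11 C11 -> cv0 c02 C02 ->
  unif_cv n r w20 w20u -> unif_cv n r w11 w11u -> unif_cv n r w02 w02u ->
  cont_on n r w20u -> cont_on n r w11u -> cont_on n r w02u ->
  cunif_cv r (fun e => wcomb n (u e) (c20 e) (c11 e) (c02 e) (w20 e) (w11 e) (w02 e))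
             (wcomb n u0 C20 C11 C02 w20u w11u w02u).
Proof.
  intros Hr Hu H20 H11 H02 U20 U11 U02 K20 K11 K02.
  assert (Hdot : forall w w0, unif_cv n r w w0 -> cont_on n r w0 ->
            cunif_cv r (fun e t => dot n (u e) (w e t)) (fun t => dot n u0 (w0 t))).
  { intros w w0 Hw Hw0. apply cunif_cv_csum. intros i Hi.
    apply cunif_cv_mult; [exact Hr | apply ccont_on_const | apply (cont_on_ccont_on n); assumption
                          | apply cunif_cv_cst, Hu, Hi
                          | apply (unif_cv_cunif_cv r n); assumption]. }
  unfold wcomb. repeat apply cunif_cv_plus;
    (apply cunif_cv_mult; [exact Hr | apply ccont_on_const | apply ccont_on_dot; assumption
                          | apply cunif_cv_cst; assumption | apply Hdot; assumption]).
Qed.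

End VectorLimits.

Lemma cv0_h2_value r om (mu ome : R -> R) eps0 (g21 g12 b1 b2 : R -> C) G21 G12 B1 B2
  (V : R -> R -> C) V0 :
  0 < r -> om <> 0 -> 0 < eps0 -> (forall e, 0 < e < eps0 -> 0 < mu e) ->
  cv0 mu 0 -> cv0 ome om ->
  cv0 g21 G21 -> cv0 g12 G12 -> cv0 b1 B1 -> cv0 b2 B2 ->
  (forall e, 0 < e < eps0 -> ccont_on r (V e)) -> cunif_cv r V V0 -> ccont_on r V0 ->
  exists L, cv0 (fun e => h2_value r (mu e) (ome e) (g21 e) (g12 e) (b1 e) (b2 e) (V e)) L.
Proof.
  intros Hr Hom Heps0 Hpos Hmu Home H21 H12 Hb1 Hb2 HV HUV HV0.
  set (lam := fun e => (mu e, ome e) : C).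
  assert (Hlam : cv0 lam (0, om)) by (apply filterlim_C_split; split; assumption).
  assert (Hconj : cv0 (fun e => Cconj (lam e)) (Cconj (0, om))) by (apply filterlim_Cconj, Hlam).
  assert (Hlam' : cv0 (fun e => (mu e, ome e) : C) (0, om)) by exact Hlam.
  eexists. unfold h2_value. apply filterlim_Cplus; [apply filterlim_Cminus|].
  - apply filterlim_Cmult.
    + apply filterlim_Cmult; [apply filterlim_Cmult; [exact H21 | exact Hb1]|].
      apply cv0_cexp_scal, Hlam.
    + apply filterlim_RtoC, filterlim_Rmult; [apply filterlim_const|].
      apply (cv0_taylor2_quot mu eps0); assumption.
  - apply filterlim_Cmult; [apply filterlim_Cconj, H12|].
    apply filterlim_Cmult; [exact Hb2|]. apply filterlim_Cplus.
    + apply filterlim_Cdiv with (b := Cmult (0, om) (Cminus (0, om) (Cconj (0, om)))).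
      * intro H. apply (f_equal Re) in H. unfold Re in H. simpl in H. nra.
      * apply filterlim_Cminus; apply cv0_cexp_scal; [exact Hlam | exact Hconj].
      * apply filterlim_Cmult; [exact Hlam | apply filterlim_Cminus; [exact Hlam | exact Hconj]].
    + apply filterlim_Cdiv with (b := Cmult (RtoC 2) (0, om)).
      * intro H. apply (f_equal Im) in H. unfold Im in H. simpl in H. lra.
      * apply filterlim_Cmult; [apply cv0_cexp_scal, Hlam|].
        apply filterlim_RtoC, (cv0_decay_quot mu eps0); auto; lra.
      * apply filterlim_Cmult; [apply filterlim_const | exact Hlam].
  - assert (Hq : forall m, m <> 0 -> ccont_on r (fun t => RtoC (decay_quot m (t + r))))
      by (intros; apply ccont_on_RtoC; intros; unfold decay_quot; auto_derive; auto).
    assert (HK : forall z, ccont_on r (fun t => cexp (Cmult (RtoC (- (t + r))) z)))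
      by (intros; apply ccont_on_cexp_scal; intros; auto_derive; auto).
    assert (Hlin : ccont_on r (fun t => RtoC (2 * (t + r))))
      by (apply ccont_on_RtoC; intros; auto_derive; auto).
    apply (cv0_cint r _ (fun t => Cmult (Cmult (cexp (Cmult (RtoC (- (t + r))) (0, om)))
                                               (RtoC (2 * (t + r)))) (V0 t))); [exact Hr | | | ].
    + exists eps0. split; [exact Heps0|]. intros e He.
      apply ccont_on_mult; [apply ccont_on_mult; [apply HK | apply Hq] | apply HV; exact He].
      specialize (Hpos e He). lra.
    + apply ccont_on_mult; [apply ccont_on_mult; [apply HK | exact Hlin] | exact HV0].
    + apply cunif_cv_mult;
        [lra | apply ccont_on_mult; [apply HK | exact Hlin] | exact HV0 | | exact HUV].
      apply cunif_cv_mult; [lra | apply HK | exact Hlin | |].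
      * apply cunif_cv_cexp_scal; [lra | reflexivity | exact Hlam].
      * apply (cunif_cv_decay_quot mu eps0); auto; lra.
Qed.

Lemma cv0_h1_value n (B : R -> rmat) B0 r om (mu ome : R -> R) eps0 (P : R -> cvec) P0 :
  0 <= r -> 0 < eps0 -> (forall e, 0 < e < eps0 -> 0 < mu e) -> cv0 mu 0 -> cv0 ome om ->
  (forall i j, cv0 (fun e => B e i j) (B0 i j)) ->
  (forall i, (i < n)%nat -> cv0 (fun e => P e i) (P0 i)) ->
  forall j, (j < n)%nat -> exists L, cv0 (fun e => h1_value n (B e) r (mu e) (ome e) (P e) j) L.
Proof.
  intros Hr Heps0 Hpos Hmu Home HB HP j Hj. eexists. unfold h1_value.
  apply filterlim_Cplus; [apply filterlim_Cmult; [apply filterlim_const | apply HP, Hj]|].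
  apply filterlim_Cmult; [apply cv0_vm; eassumption|].
  apply filterlim_Cmult; [apply (cv0_cexp_scal _ _ (0, om)), filterlim_C_split; split; assumption|].
  apply filterlim_RtoC, (cv0_decay_quot mu eps0); assumption.
Qed.

Lemma cv0_h2_value_wcomb n r om (mu ome : R -> R) eps0 (B : R -> rmat) B0 (P : R -> cvec) P0
  (phi : R -> cvec) phi0 (g20 g11 g02 g21 g12 : R -> C) G20 G11 G02 G21 G12
  (w20 w11 w02 : R -> R -> cvec) w20u w11u w02u :
  0 < r -> om <> 0 -> 0 < eps0 -> (forall e, 0 < e < eps0 -> 0 < mu e) ->
  cv0 mu 0 -> cv0 ome om ->
  (forall i j, cv0 (fun e => B e i j) (B0 i j)) ->
  (forall i, (i < n)%nat -> cv0 (fun e => P e i) (P0 i)) ->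
  (forall i, (i < n)%nat -> cv0 (fun e => phi e i) (phi0 i)) ->
  cv0 g20 G20 -> cv0 g11 G11 -> cv0 g02 G02 -> cv0 g21 G21 -> cv0 g12 G12 ->
  (forall e, 0 < e < eps0 ->
     cont_on n r (w20 e) /\ cont_on n r (w11 e) /\ cont_on n r (w02 e)) ->
  cont_on n r w20u /\ cont_on n r w11u /\ cont_on n r w02u ->
  unif_cv n r w20 w20u /\ unif_cv n r w11 w11u /\ unif_cv n r w02 w02u ->
  exists L, cv0 (fun e =>
    h2_value r (mu e) (ome e) (g21 e) (g12 e)
      (dot n (vm n (P e) (rtoc_mat (B e))) (phi e))
      (dot n (vm n (P e) (rtoc_mat (B e))) (fun i => Cconj (phi e i)))
      (wcomb n (vm n (P e) (rtoc_mat (B e))) (Cmult (RtoC 2) (g11 e))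
             (Cplus (g20 e) (Cmult (RtoC 2) (Cconj (g11 e)))) (Cconj (g02 e))
             (w20 e) (w11 e) (w02 e))) L.
Proof.
  intros Hr Hom Heps0 Hpos Hmu Home HB HP Hphi H20 H11 H02 H21 H12 Hw
    [K20 [K11 K02]] [U20 [U11 U02]].
  assert (Hu : forall j, (j < n)%nat ->
             cv0 (fun e => vm n (P e) (rtoc_mat (B e)) j) (vm n P0 (rtoc_mat B0) j))
    by (intros; apply cv0_vm; assumption).
  eapply (cv0_h2_value r om mu ome eps0); try eassumption.
  - apply cv0_dot; [exact Hu | exact Hphi].
  - apply cv0_dot; [exact Hu | intros k Hk; apply filterlim_Cconj, Hphi, Hk].
  - intros e He. destruct (Hw e He) as [C20 [C11 C02]]. apply ccont_on_wcomb; assumption.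
  - apply cunif_cv_wcomb; [lra | exact Hu | | | | eassumption ..].
    + apply filterlim_Cmult; [apply filterlim_const | exact H11].
    + apply filterlim_Cplus; [exact H20|].
      apply filterlim_Cmult; [apply filterlim_const | apply filterlim_Cconj, H11].
    + apply filterlim_Cconj, H02.
  - apply ccont_on_wcomb; assumption.
Qed.

Theorem proposition4p2
  (n : nat) (r om : R) (A B : rmat)
  (* unperturbed linearisation *)
  (Hr : 0 < r) (Hom : 0 < om)
  (Hroot : simple_root n A B r (0, om))
  (Hrootc : simple_root n A B r (0, - om))
  (Hothers : forall z : C, chardet n A B r z = RtoC 0 ->
               z <> (0, om) -> z <> (0, - om) -> Re z < 0)
  (* perturbation *)
  (Ae Be : R -> rmat)
  (Hsmooth : forall i j k e, 0 < e ->
               ex_derive_n (fun x => Ae x i j) k e /\ ex_derive_n (fun x => Be x i j) k e)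
  (HAcv : forall i j, cv0 (fun e => Ae e i j) (A i j))
  (HBcv : forall i j, cv0 (fun e => Be e i j) (B i j))
  (mu ome : R -> R) (eps0 : R) (Heps0 : 0 < eps0)
  (Hpert : forall e, 0 < e < eps0 ->
     0 < mu e /\
     simple_root n (Ae e) (Be e) r (mu e, ome e) /\
     simple_root n (Ae e) (Be e) r (mu e, - ome e) /\
     (forall z : C, chardet n (Ae e) (Be e) r z = RtoC 0 ->
        z <> (mu e, ome e) -> z <> (mu e, - ome e) -> Re z < 0))
  (Hmucv : cv0 mu 0) (Homcv : cv0 ome om)
  (* eigenvectors phi_{eps1}(0), psi_{eps1}(0) and their unperturbed limits *)
  (phi psi : R -> cvec) (phiu psiu : cvec)
  (Hphi : forall e, 0 < e < eps0 -> nonzero_vec n (phi e) /\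
     forall i, (i < n)%nat ->
       mv n (charmat (Ae e) (Be e) r (mu e, ome e)) (phi e) i = RtoC 0)
  (Hpsi : forall e, 0 < e < eps0 -> nonzero_vec n (psi e) /\
     forall j, (j < n)%nat ->
       vm n (psi e) (charmat (Ae e) (Be e) r (mu e, ome e)) j = RtoC 0)
  (Hphiu : nonzero_vec n phiu /\
     forall i, (i < n)%nat -> mv n (charmat A B r (0, om)) phiu i = RtoC 0)
  (Hpsiu : nonzero_vec n psiu /\
     forall j, (j < n)%nat -> vm n psiu (charmat A B r (0, om)) j = RtoC 0)
  (Hphicv : forall i, (i < n)%nat -> cv0 (fun e => phi e i) (phiu i))
  (Hpsicv : forall i, (i < n)%nat -> cv0 (fun e => psi e i) (psiu i))
  (* Psi_{eps1}(0) and Psi_1(0) are well defined *)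
  (Hden : forall e, 0 < e < eps0 ->
     Cplus (dot n (psi e) (phi e))
       (Cmult (Cmult (dot n (psi e) (mv n (rtoc_mat (Be e)) (phi e)))
                     (cexp (Cmult (RtoC (- r)) (mu e, ome e)))) (RtoC r)) <> RtoC 0)
  (Hdenu : Cplus (dot n psiu phiu)
       (Cmult (Cmult (dot n psiu (mv n (rtoc_mat B) phiu))
                     (cexp (Cmult (RtoC (- r)) (0, om)))) (RtoC r)) <> RtoC 0)
  (* coefficients w_{eps j,k} of the unstable manifold and their limits *)
  (w20 w11 w02 : R -> R -> cvec) (w20u w11u w02u : R -> cvec)
  (Hwcont : forall e, 0 < e < eps0 ->
     cont_on n r (w20 e) /\ cont_on n r (w11 e) /\ cont_on n r (w02 e))
  (Hwucont : cont_on n r w20u /\ cont_on n r w11u /\ cont_on n r w02u)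
  (Hworth : forall e, 0 < e < eps0 ->
     let P := Psifun (mu e, ome e)
                (Psi0 n (Be e) r (mu e, ome e) (psi e) (phi e)) in
     bilin n (Be e) r P (w20 e) = RtoC 0 /\
     bilin n (Be e) r P (w11 e) = RtoC 0 /\
     bilin n (Be e) r P (w02 e) = RtoC 0)
  (Hwcv : unif_cv n r w20 w20u /\ unif_cv n r w11 w11u /\ unif_cv n r w02 w02u)
  (* Taylor coefficients f_{eps j,k} and their limits *)
  (f20 f11 f02 f21 f12 : R -> cvec) (f20u f11u f02u f21u f12u : cvec)
  (Hfcv : forall i, (i < n)%nat ->
     cv0 (fun e => f20 e i) (f20u i) /\ cv0 (fun e => f11 e i) (f11u i) /\
     cv0 (fun e => f02 e i) (f02u i) /\ cv0 (fun e => f21 e i) (f21u i) /\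
     cv0 (fun e => f12 e i) (f12u i)) :
  let lam := fun e => (mu e, ome e) : C in
  let P0 := fun e => Psi0 n (Be e) r (lam e) (psi e) (phi e) in
  let g := fun (f : R -> cvec) e => dot n (P0 e) (f e) in
  let R1 := fun e => R1vec r (lam e) (phi e) (g f20 e) (g f11 e) (g f02 e)
                        (g f21 e) (g f12 e) (w20 e) (w11 e) (w02 e) in
  let R2 := fun e => R2vec (phi e) (g f20 e) (g f11 e) (g f02 e)
                        (g f21 e) (g f12 e) (f21 e) (w20 e) (w11 e) (w02 e) in
  exists (h1 : R -> cvec) (h2 : R -> C) (eps1 : R),
    0 < eps1 /\
    (forall e, 0 < e < eps1 ->
       (forall j, (j < n)%nat ->
          vm n (P0 e) (Mmat (Ae e) (Be e) r (lam e)) j = Cmult (RtoC (mu e)) (h1 e j)) /\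
       dot n (P0 e) (vsub (mv n (rtoc_mat (Be e)) (R1 e)) (R2 e))
         = Cmult (RtoC (mu e)) (h2 e)) /\
    (forall j, (j < n)%nat -> exists L : C, cv0 (fun e => h1 e j) L) /\
    (exists L : C, cv0 h2 L).
Proof.
  intros lam P0 g R1 R2.
  assert (Hpos : forall e, 0 < e < eps0 -> 0 < mu e) by (intros e He; apply Hpert, He).
  destruct (proj1 (cv0_R_eps ome om) Homcv om Hom) as [d [Hd Hclose]].
  assert (HP0 : forall i, (i < n)%nat -> cv0 (fun e => P0 e i) (Psi0 n B r (0, om) psiu phiu i))
    by (apply cv0_Psi0; [| apply filterlim_C_split; split |..]; assumption).
  assert (Hg : forall f fu, (forall i, (i < n)%nat -> cv0 (fun e => f e i) (fu i)) ->
             cv0 (g f) (dot n (Psi0 n B r (0, om) psiu phiu) fu))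
    by (intros; apply cv0_dot; assumption).
  exists (fun e => h1_value n (Be e) r (mu e) (ome e) (P0 e)).
  exists (fun e => h2_value r (mu e) (ome e) (g f21 e) (g f12 e)
    (dot n (vm n (P0 e) (rtoc_mat (Be e))) (phi e))
    (dot n (vm n (P0 e) (rtoc_mat (Be e))) (fun i => Cconj (phi e i)))
    (wcomb n (vm n (P0 e) (rtoc_mat (Be e))) (Cmult (RtoC 2) (g f11 e))
           (Cplus (g f20 e) (Cmult (RtoC 2) (Cconj (g f11 e)))) (Cconj (g f02 e))
           (w20 e) (w11 e) (w02 e))).
  exists (Rmin eps0 d). split; [apply Rmin_glb_lt; assumption|]. split; [|split].
  - intros e [He He']. destruct (Rlt_Rmin_inv e _ _ He') as [He0 Hed].
    specialize (Hpos e ltac:(lra)). specialize (Hclose e ltac:(lra)).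
    apply Rabs_lt_between in Hclose.
    destruct (Hpsi e ltac:(lra)) as [_ Hpsi_e]. destruct (Hphi e ltac:(lra)) as [_ Hphi_e].
    destruct (Hwcont e ltac:(lra)) as [C20 [C11 C02]].
    destruct (Hworth e ltac:(lra)) as [O20 [O11 O02]].
    split.
    + intros j Hj. apply vm_Mmat_left_eigen; [exact Hj | lra |].
      apply vm_Psi0_left_eigen, Hpsi_e, Hj.
    + apply (dot_R1vec_R2vec_factor n (Ae e)); auto; lra.
  - apply (cv0_h1_value n Be B r om mu ome eps0 P0 (Psi0 n B r (0, om) psiu phiu)); auto; lra.
  - eapply (cv0_h2_value_wcomb n r om mu ome eps0 Be B P0 _ phi); try eassumption; try lra;
      apply Hg; intros k Hk; apply Hfcv, Hk.
Qed.
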